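(* Suppose $(A,B)$ is controllable. For each $M>0$ let $\hat x_M\in C([0,T],\mathbb R^n)$ be a path, and suppose the family $\{\hat x_M\}_{M>0}$ is uniformly bounded with respect to $M$ in the norm $\big(\int_0^T\|\cdot\|^2dt\big)^{1/2}$. Consider finitely many agents with fixed initial states $x_1^0,\dots,x_N^0$, each applying, for the given $M$, the optimal tracking control law of $\hat x_M$ (i.e. $u_i^*=-\frac1rB^T(\Gamma x_i+\beta_j)$ if $x_i^0\in D_j(\hat x_M)$, with $\Gamma,\beta_j,D_j$ computed with terminal weight $M$ and tracked path $\hat x_M$). Then for every $\epsilon>0$ there exists $M_0>0$ such that for all $M>M_0$, every agent's state at time $T$ lies in a ball of radius $\epsilon$ centered at one of the points $p_1,\dots,p_l$.
   Context: Agents have dynamics $\dot x_i=Ax_i+Bu_i$, $x_i(0)=x_i^0$, with $A\in\mathbb R^{n\times n}$, $B\in\mathbb R^{n\times m}$; constants $q,r,M>0$, horizon $T>0$, destinations $p_1,\dots,p_l\in\mathbb R^n$. For a tracked path $\hat x$ and a given $M$, $\Gamma,\beta_k,\delta_k$ are the unique solutions on $[0,T]$ of $\dot\Gamma-\frac1r\Gamma BB^T\Gamma+\Gamma A+A^T\Gamma+qI_n=0$, $\Gamma(T)=MI_n$; $\dot\beta_k=(\frac1r\Gamma BB^T-A^T)\beta_k+q\hat x$, $\beta_k(T)=-Mp_k$; $\dot\delta_k=\frac1{2r}\beta_k^TBB^T\beta_k-\frac q2\hat x^T\hat x$, $\delta_k(T)=\frac M2p_k^Tp_k$. Basins: $D_j(\hat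 x)=\{x:(\beta_j(0)-\beta_k(0))^Tx\le\delta_k(0)-\delta_j(0)\ \forall k\}$, with ties broken in favor of the smallest index $j$. This control law is the optimal control for the cost $\int_0^T\{\frac q2\|x_i-\hat x\|^2+\frac r2\|u_i\|^2\}dt+\frac M2\min_j\|x_i(T)-p_j\|^2$. *)

From Stdlib Require Import Reals.
Open Scope R_scope.

(* Vectors in R^k are represented as functions nat -> R (only indices < k
   matter); matrices as nat -> nat -> R (row, column). Dimensions are passed
   explicitly to every operation. *)
Definition vec := nat -> R.
Definition mat := nat -> nat -> R.

Fixpoint sumR (k : nat) (f : nat -> R) : R :=
  match k with O => 0 | S k' => sumR k' f + f k' end.

Definition dot (k : nat) (u v : vec) : R := sumR k (fun i => u i * v i).
Definition vnorm (k : nat) (u : vec) : R := sqrt (dot k u u).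
Definition mvec (k : nat) (A : mat) (v : vec) : vec :=
  fun i => sumR k (fun c => A i c * v c).
Definition mmul (k : nat) (A B : mat) : mat :=
  fun i j => sumR k (fun c => A i c * B c j).
Definition trm (A : mat) : mat := fun i j => A j i.
Definition idm : mat := fun i j => if Nat.eqb i j then 1 else 0.

Fixpoint mpow (n : nat) (A : mat) (k : nat) : mat :=
  match k with O => idm | S k' => mmul n A (mpow n A k') end.

(* Kalman controllability matrix [B, AB, ..., A^(n-1) B]  (n x nm):
   column a + m*k (a < m, k < n) is column a of A^k B. *)
Definition kalman (n m : nat) (A B : mat) : mat :=
  fun i c => mmul n (mpow n A (c / m)) B i (c mod m).

(* rank = n for an n x c matrix K: its n rows are linearly independent. *)
Definition full_row_rank (n c : nat) (K : mat) : Prop :=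
  forall v : vec,
    (forall j, (j < c)%nat -> sumR n (fun i => v i * K i j) = 0) ->
    forall i, (i < n)%nat -> v i = 0.

Definition controllable (n m : nat) (A B : mat) : Prop :=
  full_row_rank n (n * m) (kalman n m A B).

Definition cont_on (a b : R) (f : R -> R) : Prop :=
  forall t, a <= t <= b -> forall eps, 0 < eps ->
    exists d, 0 < d /\ forall s, a <= s <= b -> Rabs (s - t) < d ->
      Rabs (f s - f t) < eps.

Definition ode_sol (a b : R) (f g : R -> R) : Prop :=
  cont_on a b f /\ forall t, a < t < b -> derivable_pt_lim f t (g t).

Definition riccati_sol (n m : nat) (A B : mat) (q r T M : R)
    (G : R -> mat) : Prop :=
  forall i j, (i < n)%nat -> (j < n)%nat ->
    ode_sol 0 T (fun t => G t i j)
      (fun t => / r * mmul n (mmul m (mmul n (G t) B) (trm B)) (G t) i j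
                - mmul n (G t) A i j - mmul n (trm A) (G t) i j
                - q * idm i j)
    /\ G T i j = M * idm i j.

Definition beta_sol (n m : nat) (A B : mat) (q r T M : R) (G : R -> mat)
    (xhat : R -> vec) (pk : vec) (b : R -> vec) : Prop :=
  forall i, (i < n)%nat ->
    ode_sol 0 T (fun t => b t i)
      (fun t => / r * mvec n (mmul m (mmul n (G t) B) (trm B)) (b t) i
                - mvec n (trm A) (b t) i + q * xhat t i)
    /\ b T i = - M * pk i.

Definition delta_sol (n m : nat) (B : mat) (q r T M : R)
    (xhat : R -> vec) (pk : vec) (b : R -> vec) (d : R -> R) : Prop :=
  ode_sol 0 T d
    (fun t => / (2 * r) * dot m (mvec n (trm B) (b t)) (mvec n (trm B) (b t))
              - q / 2 * dot n (xhat t) (xhat t))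
  /\ d T = M / 2 * dot n pk pk.

Definition in_D (n l : nat) (b0 : nat -> vec) (d0 : nat -> R) (j : nat)
    (x : vec) : Prop :=
  forall k, (k < l)%nat ->
    dot n (fun c => b0 j c - b0 k c) x <= d0 k - d0 j.

(* x belongs to the basin D_j, ties broken in favour of the smallest index *)
Definition basin (n l : nat) (b0 : nat -> vec) (d0 : nat -> R) (j : nat)
    (x : vec) : Prop :=
  (j < l)%nat /\ in_D n l b0 d0 j x /\
  forall j', (j' < j)%nat -> ~ in_D n l b0 d0 j' x.

Definition agent_traj (n m : nat) (A B : mat) (r T : R) (G : R -> mat)
    (bj : R -> vec) (x0 : vec) (x : R -> vec) : Prop :=
  forall i, (i < n)%nat ->
    x 0 i = x0 i /\
    ode_sol 0 T (fun t => x t i)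
      (fun t => mvec n A (x t) i
                + mvec m B (fun a => - / r *
                     mvec n (trm B) (fun c => mvec n (G t) (x t) c + bj t c) a) i).

From Stdlib Require Import Reals.
Open Scope R_scope.
From Stdlib Require Import Lra Lia Factorial FunctionalExtensionality Classical IndefiniteDescription Wf_nat.
From Coquelicot Require Import Coquelicot.

(* For the trajectory x_i of an agent whose initial state lies in the basin D_j,
   the function V_j(t,y) = 1/2 y'Γ(t)y + β_j(t)'y + δ_j(t) is non-increasing along
   x_i (completion of squares in the Riccati, β and δ equations, using that Γ is
   symmetric), and V_j(T,y) = M/2 |y - p_j|^2.  Since x_i^0 lies in D_j,
   V_j(0,x_i^0) <= V_1(0,x_i^0), and the same completion of squares bounds
   V_1(0,x_i^0) by the tracking cost of any control steering x_i^0 to p_1 in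
   time T.  Controllability provides such a control (built from the flat outputs
   t^s (t - T)^n), whose cost is independent of M up to q times the squared L2
   norm of x̂_M.  Hence M/2 |x_i(T) - p_j|^2 is bounded uniformly in M. *)

Lemma sumR_ext k f g : (forall i, (i < k)%nat -> f i = g i) -> sumR k f = sumR k g.
Proof.
induction k; simpl; intros H; auto.
rewrite IHk by (intros; apply H; lia). rewrite H by lia. reflexivity.
Qed.

Lemma sumR_plus k f g : sumR k (fun i => f i + g i) = sumR k f + sumR k g.
Proof. induction k; simpl; [lra | rewrite IHk; lra]. Qed.

Lemma sumR_minus k f g : sumR k (fun i => f i - g i) = sumR k f - sumR k g.
Proof. induction k; simpl; [lra | rewrite IHk; lra]. Qed.

Lemma sumR_scal_l k c f : sumR k (fun i => c * f i) = c * sumR k f.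
Proof. induction k; simpl; [lra | rewrite IHk; lra]. Qed.

Lemma sumR_scal_r k c f : sumR k (fun i => f i * c) = sumR k f * c.
Proof. induction k; simpl; [lra | rewrite IHk; lra]. Qed.

Lemma sumR_eq0 k f : (forall i, (i < k)%nat -> f i = 0) -> sumR k f = 0.
Proof.
intros H. rewrite (sumR_ext k f (fun _ => 0)) by auto.
induction k; simpl; [reflexivity | rewrite IHk; [lra | intros; apply H; lia]].
Qed.

Lemma sumR_swap a b f :
  sumR a (fun i => sumR b (fun j => f i j)) = sumR b (fun j => sumR a (fun i => f i j)).
Proof.
induction a; simpl.
- symmetry; apply sumR_eq0; auto.
- rewrite IHa, <- sumR_plus. reflexivity.
Qed.

Lemma sumR_le k f g : (forall i, (i < k)%nat -> f i <= g i) -> sumR k f <= sumR k g.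
Proof.
induction k; simpl; intros H; [lra |].
assert (f k <= g k) by (apply H; lia).
assert (sumR k f <= sumR k g) by (apply IHk; intros; apply H; lia). lra.
Qed.

Lemma sumR_nonneg k f : (forall i, (i < k)%nat -> 0 <= f i) -> 0 <= sumR k f.
Proof.
intros H. replace 0 with (sumR k (fun _ => 0)) by (apply sumR_eq0; auto).
apply sumR_le; auto.
Qed.

Lemma sumR_abs_le k f g : (forall i, (i < k)%nat -> Rabs (f i) <= g i) -> Rabs (sumR k f) <= sumR k g.
Proof.
induction k; simpl; intros H; [rewrite Rabs_R0; lra |].
eapply Rle_trans; [apply Rabs_triang |].
apply Rplus_le_compat; [apply IHk; intros; apply H | apply H]; lia.
Qed.

Lemma sumR_const k c : sumR k (fun _ => c) = INR k * c.
Proof. induction k; simpl sumR; [simpl; lra | rewrite IHk, S_INR; lra]. Qed.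

Lemma sumR_split a b f : sumR (a + b) f = sumR a f + sumR b (fun i => f (a + i)%nat).
Proof.
induction b; simpl; [rewrite Nat.add_0_r; lra |].
rewrite Nat.add_succ_r. simpl. rewrite IHb. lra.
Qed.

Lemma sumR_S k f : sumR (S k) f = f O + sumR k (fun i => f (S i)).
Proof. replace (S k) with (1 + k)%nat by lia. rewrite sumR_split. simpl. lra. Qed.

Lemma sumR_only k j f :
  (j < k)%nat -> (forall i, (i < k)%nat -> i <> j -> f i = 0) -> sumR k f = f j.
Proof.
induction k; intros Hj H; [lia |]. simpl. destruct (Nat.eq_dec j k).
- subst. rewrite sumR_eq0; [lra |]. intros; apply H; lia.
- rewrite IHk by (try lia; intros; apply H; lia). rewrite (H k) by lia. lra.
Qed.

Lemma sumR_indicator k j (K : nat -> R) a : (j < k)%nat ->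
  sumR k (fun i => K i * (if Nat.eqb i j then a else 0)) = K j * a.
Proof.
intros Hj. rewrite (sumR_only k j); auto.
- rewrite Nat.eqb_refl. reflexivity.
- intros i _ Hij. destruct (Nat.eqb_spec i j); [lia | ring].
Qed.

Lemma sumR_rev k f : sumR k f = sumR k (fun i => f (k - 1 - i)%nat).
Proof.
induction k; auto.
change (S k) with (1 + k)%nat at 2. rewrite sumR_split. simpl sumR at 2. simpl sumR at 1.
rewrite IHk. replace (k - 0 - 0)%nat with k by lia.
rewrite (sumR_ext k (fun i => f (k - 1 - i)%nat) (fun i => f (S k - 1 - (1 + i))%nat))
  by (intros; f_equal; lia).
lra.
Qed.

Lemma sumR_mult_index n m f :
  sumR (n * m) f = sumR n (fun k => sumR m (fun a => f (a + m * k)%nat)).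
Proof.
induction n; simpl; auto. rewrite Nat.add_comm, sumR_split, IHn.
f_equal. apply sumR_ext; intros; f_equal; lia.
Qed.

Lemma sumR_ge_term k f j : (forall i, (i < k)%nat -> 0 <= f i) -> (j < k)%nat -> f j <= sumR k f.
Proof.
induction k; intros H Hj; [lia |]. simpl. destruct (Nat.eq_dec j k).
- subst. assert (0 <= sumR k f) by (apply sumR_nonneg; intros; apply H; lia). lra.
- assert (f j <= sumR k f) by (apply IHk; [intros; apply H; lia | lia]).
  assert (0 <= f k) by (apply H; lia). lra.
Qed.

Lemma sumR_nonneg_eq0 k f : (forall i, (i < k)%nat -> 0 <= f i) -> sumR k f = 0 ->
  forall j, (j < k)%nat -> f j = 0.
Proof.
intros H H0 j Hj. assert (f j <= sumR k f) by (apply sumR_ge_term; auto).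
assert (0 <= f j) by auto. lra.
Qed.

Lemma dot_comm k u v : dot k u v = dot k v u.
Proof. unfold dot. apply sumR_ext; intros; ring. Qed.

Lemma dot_ext k u u' v v' : (forall i, (i < k)%nat -> u i = u' i) ->
  (forall i, (i < k)%nat -> v i = v' i) -> dot k u v = dot k u' v'.
Proof. intros Hu Hv. unfold dot. apply sumR_ext; intros. rewrite Hu, Hv; auto. Qed.

Lemma dot_plus_l k u v w : dot k (fun i => u i + v i) w = dot k u w + dot k v w.
Proof. unfold dot. rewrite <- sumR_plus. apply sumR_ext; intros; ring. Qed.

Lemma dot_plus_r k u v w : dot k w (fun i => u i + v i) = dot k w u + dot k w v.
Proof. unfold dot. rewrite <- sumR_plus. apply sumR_ext; intros; ring. Qed.

Lemma dot_minus_l k u v w : dot k (fun i => u i - v i) w = dot k u w - dot k v w.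
Proof. unfold dot. rewrite <- sumR_minus. apply sumR_ext; intros; ring. Qed.

Lemma dot_minus_r k u v w : dot k w (fun i => u i - v i) = dot k w u - dot k w v.
Proof. unfold dot. rewrite <- sumR_minus. apply sumR_ext; intros; ring. Qed.

Lemma dot_scal_l k c u w : dot k (fun i => c * u i) w = c * dot k u w.
Proof. unfold dot. rewrite <- sumR_scal_l. apply sumR_ext; intros; ring. Qed.

Lemma dot_scal_r k c u w : dot k w (fun i => c * u i) = c * dot k w u.
Proof. unfold dot. rewrite <- sumR_scal_l. apply sumR_ext; intros; ring. Qed.

Lemma dot_sumR k u N (f : nat -> vec) :
  dot k u (fun r => sumR N (fun j => f j r)) = sumR N (fun j => dot k u (f j)).
Proof. unfold dot. rewrite <- sumR_swap. apply sumR_ext; intros. rewrite <- sumR_scal_l. auto. Qed.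

Lemma dot_self_nonneg k u : 0 <= dot k u u.
Proof. apply sumR_nonneg. intros. apply Rle_0_sqr. Qed.

Lemma dot_self_eq0 k u : (forall i, (i < k)%nat -> u i = 0) -> dot k u u = 0.
Proof. intros H. apply sumR_eq0. intros i Hi. rewrite H; auto; ring. Qed.

Lemma dot_self_minus_le k u w :
  dot k (fun i => u i - w i) (fun i => u i - w i) <= 2 * dot k u u + 2 * dot k w w.
Proof.
unfold dot. rewrite <- !sumR_scal_l, <- sumR_plus. apply sumR_le. intros.
assert (0 <= (u i + w i) * (u i + w i)) by apply Rle_0_sqr. nra.
Qed.

Lemma mvec_ext k X v w i : (forall c, (c < k)%nat -> v c = w c) -> mvec k X v i = mvec k X w i.
Proof. intros H; unfold mvec; apply sumR_ext; intros; rewrite H; auto. Qed.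

Lemma mvec_plus k X v w i : mvec k X (fun c => v c + w c) i = mvec k X v i + mvec k X w i.
Proof. unfold mvec. rewrite <- sumR_plus. apply sumR_ext; intros; ring. Qed.

Lemma mvec_minus k X v w i : mvec k X (fun c => v c - w c) i = mvec k X v i - mvec k X w i.
Proof. unfold mvec. rewrite <- sumR_minus. apply sumR_ext; intros; ring. Qed.

Lemma mvec_scal k X a v i : mvec k X (fun c => a * v c) i = a * mvec k X v i.
Proof. unfold mvec. rewrite <- sumR_scal_l. apply sumR_ext; intros; ring. Qed.

Lemma mvec_sumR k X N (f : nat -> vec) i :
  mvec k X (fun c => sumR N (fun j => f j c)) i = sumR N (fun j => mvec k X (f j) i).
Proof. unfold mvec. rewrite <- sumR_swap. apply sumR_ext; intros. rewrite <- sumR_scal_l. auto. Qed.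

Lemma mvec_idm k u i : (i < k)%nat -> mvec k idm u i = u i.
Proof.
intros Hi. unfold mvec. rewrite (sumR_only k i); auto.
- unfold idm. rewrite Nat.eqb_refl. ring.
- intros c _ Hc. unfold idm. destruct (Nat.eqb_spec i c); [lia | ring].
Qed.

Lemma mvec_mmul k j X Y v i : mvec k (mmul j X Y) v i = mvec j X (mvec k Y v) i.
Proof.
unfold mvec, mmul.
rewrite (sumR_ext k _ (fun c => sumR j (fun d => X i d * Y d c * v c)))
  by (intros; rewrite <- sumR_scal_r; auto).
rewrite sumR_swap. apply sumR_ext; intros. rewrite <- sumR_scal_l. apply sumR_ext; intros; ring.
Qed.

Lemma mmul_assoc k j X Y Z a b : mmul k (mmul j X Y) Z a b = mmul j X (mmul k Y Z) a b.
Proof.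
unfold mmul.
rewrite (sumR_ext k _ (fun c => sumR j (fun d => X a d * Y d c * Z c b)))
  by (intros; rewrite <- sumR_scal_r; auto).
rewrite sumR_swap. apply sumR_ext; intros. rewrite <- sumR_scal_l. apply sumR_ext; intros; ring.
Qed.

Lemma dot_mvec p q u X v : dot p u (mvec q X v) = dot q (mvec p (trm X) u) v.
Proof.
unfold dot, mvec, trm.
rewrite (sumR_ext p _ (fun i => sumR q (fun c => u i * X i c * v c)))
  by (intros; rewrite <- sumR_scal_l; apply sumR_ext; intros; ring).
rewrite sumR_swap. apply sumR_ext; intros. rewrite <- sumR_scal_r. apply sumR_ext; intros; ring.
Qed.

Lemma dot_mvec_sym n (G : mat) u v : (forall i j, (i < n)%nat -> (j < n)%nat -> G i j = G j i) ->
  dot n u (mvec n G v) = dot n (mvec n G u) v.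
Proof.
intros Hs. rewrite dot_mvec. apply dot_ext; auto.
intros i Hi. unfold mvec, trm. apply sumR_ext; intros. rewrite Hs; auto.
Qed.

Lemma full_row_rank_pivot n c K : full_row_rank (S n) c K ->
  exists j0, (j0 < c)%nat /\ K O j0 <> 0.
Proof.
intros HK. apply NNPP; intro Hn.
assert (H0 : (fun i : nat => if Nat.eqb i 0 then 1 else 0) O = 0).
{ refine (HK (fun i : nat => if Nat.eqb i 0 then 1 else 0) _ O _); [| lia].
  intros j Hj. rewrite sumR_S. simpl. rewrite sumR_eq0 by (intros; simpl; ring).
  assert (K O j = 0) by (apply NNPP; intro; apply Hn; eauto). lra. }
simpl in H0. lra.
Qed.

Lemma full_row_rank_eliminate n c K j0 : full_row_rank (S n) c K -> K O j0 <> 0 ->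
  full_row_rank n c (fun i j => K (S i) j - (K (S i) j0 / K O j0) * K O j).
Proof.
intros HK Hpiv lam Hl i Hi.
set (v := fun i => match i with
                   | O => - sumR n (fun i => lam i * K (S i) j0) / K O j0
                   | S i' => lam i' end).
enough (Hv : forall i, (i < S n)%nat -> v i = 0) by (apply (Hv (S i)); lia).
apply (HK v). intros j Hj. rewrite sumR_S. simpl. rewrite <- (Hl j Hj).
rewrite (sumR_ext n (fun i => lam i * (K (S i) j - K (S i) j0 / K O j0 * K O j))
   (fun i => lam i * K (S i) j - (K O j / K O j0) * (lam i * K (S i) j0)))
  by (intros; field; auto).
rewrite sumR_minus, sumR_scal_l. field. auto.
Qed.

Lemma full_row_rank_surj n : forall c K, full_row_rank n c K -> forall z : vec,
  exists w : vec, forall i, (i < n)%nat -> sumR c (fun j => K i j * w j) = z i.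
Proof.
induction n; intros c K HK z; [exists (fun _ => 0); intros; lia |].
destruct (full_row_rank_pivot n c K HK) as [j0 [Hj0 Hpiv]]. set (piv := K O j0) in *.
destruct (IHn c _ (full_row_rank_eliminate n c K j0 HK Hpiv) (fun i => z (S i) - (K (S i) j0 / piv) * z O))
  as [w' Hw'].
set (al := (z O - sumR c (fun j => K O j * w' j)) / piv).
exists (fun j => w' j + (if Nat.eqb j j0 then al else 0)).
intros i Hi.
rewrite (sumR_ext c _ (fun j => K i j * w' j + K i j * (if Nat.eqb j j0 then al else 0)))
  by (intros; ring).
rewrite sumR_plus, sumR_indicator by auto.
destruct i as [| i].
- unfold al. fold piv. field. auto.
- specialize (Hw' i ltac:(lia)). fold piv in Hw'.
  rewrite (sumR_ext c _ (fun j => K (S i) j * w' j - K (S i) j0 / piv * (K O j * w' j))) in Hw'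
    by (intros; ring).
  rewrite sumR_minus, sumR_scal_l in Hw'. unfold al. fold piv.
  replace (K (S i) j0 * ((z O - sumR c (fun j => K O j * w' j)) / piv))
    with (K (S i) j0 / piv * z O - K (S i) j0 / piv * sumR c (fun j => K O j * w' j))
    by (field; auto).
  lra.
Qed.

Lemma derivable_pt_lim_eq f t l l' : derivable_pt_lim f t l -> l = l' -> derivable_pt_lim f t l'.
Proof. intros H E; subst; auto. Qed.

Lemma derivable_pt_lim_sumR k (f : nat -> R -> R) (f' : nat -> R) t :
  (forall d, (d < k)%nat -> derivable_pt_lim (f d) t (f' d)) ->
  derivable_pt_lim (fun t => sumR k (fun d => f d t)) t (sumR k f').
Proof.
induction k; intros H; simpl; [apply derivable_pt_lim_const |].
apply (derivable_pt_lim_plus (fun t => sumR k (fun d => f d t)) (f k)).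
- apply IHk; intros; apply H; lia.
- apply H; lia.
Qed.

Lemma derivable_pt_lim_scal_r f c t l :
  derivable_pt_lim f t l -> derivable_pt_lim (fun t => f t * c) t (l * c).
Proof.
intros H. replace (l * c) with (c * l) by ring.
apply (derivable_pt_lim_ext (fun t => c * f t)); [intros; ring |].
apply derivable_pt_lim_scal; auto.
Qed.

Lemma derivable_pt_lim_exp_scal c s : derivable_pt_lim (fun s => exp (c * s)) s (c * exp (c * s)).
Proof.
replace (c * exp (c * s)) with (exp (c * s) * c) by ring.
apply (derivable_pt_lim_comp (fun s => c * s) exp); [| apply derivable_pt_lim_exp].
assert (H := derivable_pt_lim_scal id c s 1 (derivable_pt_lim_id s)).
rewrite Rmult_1_r in H. exact H.
Qed.

Lemma derivable_pt_lim_dot n (u v : R -> vec) u' v' t :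
  (forall i, (i < n)%nat -> derivable_pt_lim (fun t => u t i) t (u' i)) ->
  (forall i, (i < n)%nat -> derivable_pt_lim (fun t => v t i) t (v' i)) ->
  derivable_pt_lim (fun t => dot n (u t) (v t)) t (dot n u' (v t) + dot n (u t) v').
Proof.
intros Hu Hv. unfold dot. rewrite <- sumR_plus.
apply (derivable_pt_lim_sumR n (fun i t => u t i * v t i)). intros i Hi.
apply (derivable_pt_lim_mult (fun t => u t i) (fun t => v t i)); auto.
Qed.

Lemma derivable_pt_lim_mvec n (G : R -> mat) (y : R -> vec) Gd yd t i :
  (forall c, (c < n)%nat -> derivable_pt_lim (fun t => G t i c) t (Gd i c)) ->
  (forall c, (c < n)%nat -> derivable_pt_lim (fun t => y t c) t (yd c)) ->
  derivable_pt_lim (fun t => mvec n (G t) (y t) i) t (mvec n Gd (y t) i + mvec n (G t) yd i).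
Proof.
intros HG Hy. unfold mvec. rewrite <- sumR_plus.
apply (derivable_pt_lim_sumR n (fun c t => G t i c * y t c)). intros c Hc.
apply (derivable_pt_lim_mult (fun t => G t i c) (fun t => y t c)); auto.
Qed.

Lemma continuity_pt_dot n (u v : R -> vec) t :
  (forall i, (i < n)%nat -> continuity_pt (fun t => u t i) t) ->
  (forall i, (i < n)%nat -> continuity_pt (fun t => v t i) t) ->
  continuity_pt (fun t => dot n (u t) (v t)) t.
Proof.
intros Hu Hv. unfold dot. induction n; simpl; [apply continuity_pt_const; intros a b; auto |].
apply (continuity_pt_plus (fun t => sumR n (fun i => u t i * v t i)) (fun t => u t n * v t n)).
- apply IHn; intros; [apply Hu | apply Hv]; lia.
- apply (continuity_pt_mult (fun t => u t n) (fun t => v t n)); [apply Hu | apply Hv]; lia.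
Qed.

(* Clamping to [a,b] turns continuity on [a,b] into continuity on all of R. *)
Definition clamp (a b s : R) : R := Rmax a (Rmin b s).

Lemma clamp_in a b s : a <= b -> a <= clamp a b s <= b.
Proof. intros. unfold clamp, Rmax, Rmin. repeat destruct Rle_dec; lra. Qed.

Lemma clamp_id a b s : a <= s <= b -> clamp a b s = s.
Proof. intros. unfold clamp, Rmax, Rmin. repeat destruct Rle_dec; lra. Qed.

Lemma clamp_lipschitz a b s u : a <= b -> Rabs (clamp a b s - clamp a b u) <= Rabs (s - u).
Proof. intros. unfold clamp, Rmax, Rmin. repeat destruct Rle_dec; unfold Rabs; repeat destruct Rcase_abs; lra. Qed.

Lemma continuity_pt_clamp a b f : a <= b -> cont_on a b f ->
  forall t, continuity_pt (fun s => f (clamp a b s)) t.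
Proof.
intros Hab Hf t eps Heps.
destruct (Hf (clamp a b t) (clamp_in a b t Hab) eps Heps) as [d [Hd H]].
exists d; split; [lra |]. intros x [_ Hx]. simpl in *. unfold R_dist in *.
apply H; [apply clamp_in; auto |]. eapply Rle_lt_trans; [apply clamp_lipschitz |]; auto.
Qed.

Lemma cont_on_of_continuity_pt a b f :
  (forall t, a <= t <= b -> continuity_pt f t) -> cont_on a b f.
Proof.
intros H t Ht eps Heps. destruct (H t Ht eps Heps) as [d [Hd Hx]].
exists d; split; [lra |]. intros s Hs Hst. destruct (Req_dec s t).
- subst. replace (f t - f t) with 0 by ring. rewrite Rabs_R0; auto.
- apply (Hx s). repeat split; auto.
Qed.

Lemma cont_on_of_clamp a b f : a <= b ->
  (forall t, a <= t <= b -> continuity_pt (fun s => f (clamp a b s)) t) -> cont_on a b f.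
Proof.
intros Hab H t Ht eps Heps. destruct (cont_on_of_continuity_pt a b _ H t Ht eps Heps) as [d [Hd Hx]].
exists d; split; auto. intros s Hs Hst. specialize (Hx s Hs Hst). rewrite !clamp_id in Hx; auto.
Qed.

Lemma cont_on_plus a b f g : a <= b -> cont_on a b f -> cont_on a b g -> cont_on a b (fun t => f t + g t).
Proof.
intros Hab Hf Hg. apply cont_on_of_clamp; auto. intros.
apply (continuity_pt_plus (fun s => f (clamp a b s)) (fun s => g (clamp a b s)));
  apply continuity_pt_clamp; auto.
Qed.

Lemma cont_on_minus a b f g : a <= b -> cont_on a b f -> cont_on a b g -> cont_on a b (fun t => f t - g t).
Proof.
intros Hab Hf Hg. apply cont_on_of_clamp; auto. intros.
apply (continuity_pt_minus (fun s => f (clamp a b s)) (fun s => g (clamp a b s)));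
  apply continuity_pt_clamp; auto.
Qed.

Lemma cont_on_mult a b f g : a <= b -> cont_on a b f -> cont_on a b g -> cont_on a b (fun t => f t * g t).
Proof.
intros Hab Hf Hg. apply cont_on_of_clamp; auto. intros.
apply (continuity_pt_mult (fun s => f (clamp a b s)) (fun s => g (clamp a b s)));
  apply continuity_pt_clamp; auto.
Qed.

Lemma cont_on_const a b c : cont_on a b (fun _ => c).
Proof.
intros t Ht eps Heps. exists 1; split; [lra |]. intros.
replace (c - c) with 0 by ring. rewrite Rabs_R0; auto.
Qed.

Lemma cont_on_sumR a b k (f : nat -> R -> R) : a <= b -> (forall i, (i < k)%nat -> cont_on a b (f i)) ->
  cont_on a b (fun t => sumR k (fun i => f i t)).
Proof.
intros Hab H. induction k; simpl; [apply cont_on_const |].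
apply (cont_on_plus a b (fun t => sumR k (fun i => f i t)) (f k)); auto.
Qed.

Lemma cont_on_sub a b a' b' f : a <= a' -> b' <= b -> cont_on a b f -> cont_on a' b' f.
Proof.
intros H1 H2 Hf t Ht eps Heps. destruct (Hf t ltac:(lra) eps Heps) as [d [Hd H]].
exists d; split; auto. intros s Hs Hst; apply H; auto; lra.
Qed.

Lemma cont_on_ext a b f g : (forall t, a <= t <= b -> f t = g t) -> cont_on a b f -> cont_on a b g.
Proof.
intros E Hf t Ht eps Heps. destruct (Hf t Ht eps Heps) as [d [Hd H]].
exists d; split; auto. intros s Hs Hst. rewrite <- !E by auto. auto.
Qed.

Lemma cont_on_dot n (u v : R -> vec) a b : a <= b ->
  (forall i, (i < n)%nat -> cont_on a b (fun t => u t i)) ->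
  (forall i, (i < n)%nat -> cont_on a b (fun t => v t i)) ->
  cont_on a b (fun t => dot n (u t) (v t)).
Proof.
intros Hab Hu Hv. unfold dot. apply (cont_on_sumR a b n (fun i t => u t i * v t i)); auto.
intros i Hi. apply (cont_on_mult a b (fun t => u t i) (fun t => v t i)); auto.
Qed.

Lemma cont_on_mvec n (G : R -> mat) (y : R -> vec) a b i : a <= b ->
  (forall c, (c < n)%nat -> cont_on a b (fun t => G t i c)) ->
  (forall c, (c < n)%nat -> cont_on a b (fun t => y t c)) ->
  cont_on a b (fun t => mvec n (G t) (y t) i).
Proof.
intros Hab Hu Hv. unfold mvec. apply (cont_on_sumR a b n (fun c t => G t i c * y t c)); auto.
intros c Hc. apply (cont_on_mult a b (fun t => G t i c) (fun t => y t c)); auto.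
Qed.

Lemma cont_on_bounded a b f : a <= b -> cont_on a b f ->
  exists K, forall t, a <= t <= b -> Rabs (f t) <= K.
Proof.
intros Hab Hf.
destruct (continuity_ab_maj (fun s => Rabs (f (clamp a b s))) a b Hab) as [Mx [HM _]].
{ intros c Hc. apply (continuity_pt_comp (fun s => f (clamp a b s)) Rabs);
    [apply continuity_pt_clamp; auto | apply Rcontinuity_abs]. }
exists (Rabs (f (clamp a b Mx))). intros t Ht.
specialize (HM t Ht). simpl in HM. rewrite clamp_id in HM; auto.
Qed.

Lemma le_of_deriv_nonneg a b h h' : a < b -> cont_on a b h ->
  (forall t, a < t < b -> derivable_pt_lim h t (h' t)) ->
  (forall t, a < t < b -> 0 <= h' t) -> h a <= h b.
Proof.
intros Hab Hc Hd Hp.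
set (df := fun t => if Rlt_dec a t then if Rlt_dec t b then h' t else 0 else 0).
assert (Hdf : forall t, 0 <= df t).
{ intros. unfold df. repeat destruct Rlt_dec; try lra. apply Hp; lra. }
destruct (MVT_gen (fun s => h (clamp a b s)) a b df) as [c [Hc1 Hc2]].
- intros x Hx. rewrite Rmin_left, Rmax_right in Hx by lra.
  unfold df. destruct Rlt_dec; [| lra]. destruct Rlt_dec; [| lra].
  apply is_derive_ext_loc with h; [| apply is_derive_Reals, Hd; lra].
  assert (He : 0 < Rmin (x - a) (b - x)) by (apply Rmin_pos; lra).
  exists (mkposreal _ He). intros y Hy. simpl in Hy.
  unfold ball in Hy; simpl in Hy. unfold AbsRing_ball, abs, minus, plus, opp in Hy; simpl in Hy.
  assert (Hm1 := Rmin_l (x - a) (b - x)). assert (Hm2 := Rmin_r (x - a) (b - x)).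
  rewrite clamp_id; auto. unfold Rabs in Hy; destruct Rcase_abs in Hy; lra.
- intros; apply continuity_pt_clamp; [lra | auto].
- rewrite !clamp_id in Hc2 by lra.
  assert (0 <= df c * (b - a)) by (apply Rmult_le_pos; auto; lra). lra.
Qed.

Lemma le_of_deriv_nonpos a b h h' : a < b -> cont_on a b h ->
  (forall t, a < t < b -> derivable_pt_lim h t (h' t)) ->
  (forall t, a < t < b -> h' t <= 0) -> h b <= h a.
Proof.
intros Hab Hc Hd Hp.
enough (- h a <= - h b) by lra.
apply (le_of_deriv_nonneg a b (fun t => - h t) (fun t => - h' t)); auto.
- apply (cont_on_ext a b (fun t => 0 - h t)); [intros; ring |].
  apply cont_on_minus; [lra | apply cont_on_const | auto].
- intros. apply derivable_pt_lim_opp. auto.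
- intros t Ht; specialize (Hp t Ht); lra.
Qed.

(* exp(c t) phi(t) is nondecreasing. *)
Lemma backward_gronwall_eq0 a b c phi phi' : a < b -> cont_on a b phi ->
  (forall t, a < t < b -> derivable_pt_lim phi t (phi' t)) ->
  (forall t, a < t < b -> - c * phi t <= phi' t) ->
  (forall t, a <= t <= b -> 0 <= phi t) -> phi b = 0 ->
  forall t, a <= t <= b -> phi t = 0.
Proof.
intros Hab Hc Hd Hineq Hnn Hb t Ht. destruct (Req_dec t b) as [-> | Htb]; auto.
set (psi := fun s => exp (c * s) * phi s).
assert (Hle : psi t <= psi b).
{ apply (le_of_deriv_nonneg t b psi (fun s => exp (c * s) * c * phi s + exp (c * s) * phi' s)); [lra | | |].
  - apply (cont_on_mult t b (fun s => exp (c * s)) phi); [lra | |].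
    + apply cont_on_of_continuity_pt. intros. apply derivable_continuous_pt.
      eexists. apply derivable_pt_lim_exp_scal.
    + apply (cont_on_sub a b); auto; lra.
  - intros s Hs. apply (derivable_pt_lim_mult (fun s => exp (c * s)) phi).
    + replace (exp (c * s) * c) with (c * exp (c * s)) by ring. apply derivable_pt_lim_exp_scal.
    + apply Hd; lra.
  - intros s Hs. specialize (Hineq s ltac:(lra)). assert (0 < exp (c * s)) by apply exp_pos.
    replace (exp (c * s) * c * phi s + exp (c * s) * phi' s)
      with (exp (c * s) * (c * phi s + phi' s)) by ring.
    apply Rmult_le_pos; lra. }
unfold psi in Hle. rewrite Hb, Rmult_0_r in Hle.
assert (0 < exp (c * t)) by apply exp_pos. specialize (Hnn t Ht).
enough (phi t <= 0) by lra. apply (Rmult_le_reg_l (exp (c * t))); lra.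
Qed.

Lemma derivable_pt_lim_RInt F : (forall t, continuity_pt F t) ->
  forall a t, derivable_pt_lim (fun t => RInt F a t) t (F t).
Proof.
intros HF a t. apply is_derive_Reals. apply (is_derive_RInt F (fun t => RInt F a t) a t).
- exists (mkposreal 1 Rlt_0_1). intros y _.
  apply (RInt_correct (V := R_CompleteNormedModule)).
  apply (ex_RInt_continuous (V := R_CompleteNormedModule)).
  intros; apply continuity_pt_filterlim; auto.
- apply continuity_pt_filterlim; auto.
Qed.

Definition poly_at (a : nat -> R) (D : nat) (c t : R) : R := sumR D (fun d => a d * (t - c) ^ d).
Definition dcoef (a : nat -> R) : nat -> R := fun d => INR (S d) * a (S d).
Fixpoint dcoef_iter (i : nat) (a : nat -> R) : nat -> R :=
  match i with O => a | S i' => dcoef_iter i' (dcoef a) end.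

Lemma dcoef_iter_S i a : dcoef_iter (S i) a = dcoef (dcoef_iter i a).
Proof. revert a; induction i; intros a; simpl; auto. rewrite <- IHi. auto. Qed.

Lemma dcoef_iter_support D i a : (forall d, (D <= d)%nat -> a d = 0) ->
  forall d, (D <= d)%nat -> dcoef_iter i a d = 0.
Proof.
revert a; induction i; intros a H; simpl; auto.
apply IHi. intros d Hd. unfold dcoef. rewrite H by lia. ring.
Qed.

Lemma dcoef_iter_0 i a : dcoef_iter i a O = INR (fact i) * a i.
Proof.
revert a; induction i; intros a; [simpl; ring |].
simpl dcoef_iter. rewrite IHi. unfold dcoef. rewrite fact_simpl, mult_INR. ring.
Qed.

Lemma derivable_pt_lim_pow_shift c d t :
  derivable_pt_lim (fun t => (t - c) ^ d) t (INR d * (t - c) ^ pred d).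
Proof.
replace (INR d * (t - c) ^ pred d) with (INR d * (t - c) ^ pred d * 1) by ring.
apply (derivable_pt_lim_comp (fun t => t - c) (fun y => y ^ d)); [| apply derivable_pt_lim_pow].
replace 1 with (1 - 0) by ring.
apply derivable_pt_lim_minus; [apply derivable_pt_lim_id | apply derivable_pt_lim_const].
Qed.

Lemma poly_at_deriv a D c t : (forall d, (D <= d)%nat -> a d = 0) ->
  derivable_pt_lim (poly_at a D c) t (poly_at (dcoef a) D c t).
Proof.
intros H. unfold poly_at.
apply (derivable_pt_lim_ext (fun t => sumR D (fun d => (fun d t => a d * (t - c) ^ d) d t)));
  [intros; auto |].
replace (sumR D (fun d => dcoef a d * (t - c) ^ d))
  with (sumR D (fun d => a d * (INR d * (t - c) ^ pred d))).
{ apply derivable_pt_lim_sumR. intros. apply derivable_pt_lim_scal, derivable_pt_lim_pow_shift. }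
destruct D; [simpl; auto |].
rewrite sumR_S. replace (S D) with (D + 1)%nat by lia. rewrite sumR_split.
simpl sumR at 2. simpl sumR at 3. unfold dcoef at 2. rewrite (H (S (D + 0))) by lia. simpl INR at 1.
rewrite Rmult_0_l, Rmult_0_r, Rplus_0_l, Rmult_0_r, Rmult_0_l, Rplus_0_l, Rplus_0_r.
apply sumR_ext. intros. unfold dcoef. simpl pred. ring.
Qed.

Lemma poly_at_center a D c : (0 < D)%nat -> poly_at a D c c = a O.
Proof.
intros HD. unfold poly_at. destruct D; [lia |].
rewrite sumR_S, sumR_eq0; [simpl; ring |].
intros. replace (c - c) with 0 by ring. simpl. ring.
Qed.

Lemma sum_f_R0_sumR g j : sum_f_R0 g j = sumR (S j) g.
Proof. induction j; [simpl; ring |]. rewrite tech5, IHj. reflexivity. Qed.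

Lemma binomial_C_n0 j : Binomial.C j 0 = 1.
Proof. unfold Binomial.C. rewrite Nat.sub_0_r. simpl. field. apply INR_fact_neq_0. Qed.

(* Coefficients of x^k (x + c)^j in powers of x. *)
Definition binom_coef (k j : nat) (c : R) : nat -> R := fun d =>
  if andb (Nat.leb k d) (Nat.leb d (k + j)) then Binomial.C j (d - k) * c ^ (j - (d - k)) else 0.

Lemma binom_coef_spec k j c x : x ^ k * (x + c) ^ j = sumR (k + S j) (fun d => binom_coef k j c d * x ^ d).
Proof.
rewrite binomial, sum_f_R0_sumR, sumR_split.
rewrite (sumR_eq0 k (fun d => binom_coef k j c d * x ^ d)).
- rewrite Rplus_0_l, <- sumR_scal_l. apply sumR_ext. intros i Hi. unfold binom_coef.
  replace (Nat.leb k (k + i) && Nat.leb (k + i) (k + j))%bool with true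
    by (symmetry; apply andb_true_intro; split; apply Nat.leb_le; lia).
  replace (k + i - k)%nat with i by lia. rewrite pow_add. ring.
- intros i Hi. unfold binom_coef. replace (Nat.leb k i) with false by (symmetry; apply Nat.leb_gt; lia).
  simpl; ring.
Qed.

Lemma binom_coef_low k j c d : (d < k)%nat -> binom_coef k j c d = 0.
Proof. intros. unfold binom_coef. replace (Nat.leb k d) with false by (symmetry; apply Nat.leb_gt; lia). auto. Qed.

Lemma binom_coef_high k j c d : (k + S j <= d)%nat -> binom_coef k j c d = 0.
Proof.
intros. unfold binom_coef. replace (Nat.leb d (k + j)) with false by (symmetry; apply Nat.leb_gt; lia).
rewrite Bool.andb_false_r; auto.
Qed.

Lemma binom_coef_diag k j c : binom_coef k j c k = c ^ j.
Proof.
unfold binom_coef. replace (Nat.leb k k && Nat.leb k (k + j))%bool with true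
  by (symmetry; apply andb_true_intro; split; apply Nat.leb_le; lia).
rewrite Nat.sub_diag, binomial_C_n0, Nat.sub_0_r. ring.
Qed.

(* The i-th derivative of t^s (t - T)^n. *)
Definition endpoint_poly (n s : nat) (T : R) (i : nat) (t : R) : R :=
  poly_at (dcoef_iter i (binom_coef s n (- T))) (s + S n) 0 t.

Lemma endpoint_poly_deriv n s T i t :
  derivable_pt_lim (endpoint_poly n s T i) t (endpoint_poly n s T (S i) t).
Proof.
unfold endpoint_poly. rewrite dcoef_iter_S. apply poly_at_deriv.
apply dcoef_iter_support with (D := (s + S n)%nat). intros; apply binom_coef_high; lia.
Qed.

Lemma endpoint_poly_0_low n s T i : (i < s)%nat -> endpoint_poly n s T i 0 = 0.
Proof. intros. unfold endpoint_poly. rewrite poly_at_center, dcoef_iter_0, binom_coef_low by lia. ring. Qed.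

Lemma endpoint_poly_0_diag n s T : T <> 0 -> endpoint_poly n s T s 0 <> 0.
Proof.
intros HT. unfold endpoint_poly. rewrite poly_at_center, dcoef_iter_0, binom_coef_diag by lia.
apply Rmult_integral_contrapositive; split; [apply INR_fact_neq_0 | apply pow_nonzero; lra].
Qed.

(* Expanding the same polynomial around T instead of 0. *)
Lemma endpoint_poly_T n s T i : (i < n)%nat -> endpoint_poly n s T i T = 0.
Proof.
intros Hi.
set (h := fun i t => poly_at (dcoef_iter i (binom_coef n s T)) (s + S n) T t).
assert (Hh : forall i t, derivable_pt_lim (h i) t (h (S i) t)).
{ intros. unfold h. rewrite dcoef_iter_S. apply poly_at_deriv.
  apply dcoef_iter_support with (D := (s + S n)%nat). intros; apply binom_coef_high; lia. }
assert (Heq : forall i t, endpoint_poly n s T i t = h i t).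
{ induction i0; intros t.
  - unfold endpoint_poly, h. simpl dcoef_iter. unfold poly_at.
    rewrite (sumR_ext _ (fun d => binom_coef s n (- T) d * (t - 0) ^ d)
                        (fun d => binom_coef s n (- T) d * t ^ d))
      by (intros; rewrite Rminus_0_r; auto).
    replace (s + S n)%nat with (n + S s)%nat at 2 by lia.
    rewrite <- !binom_coef_spec. replace (t - T + T) with t by ring. unfold Rminus. ring.
  - apply uniqueness_limite with (f := endpoint_poly n s T i0) (x := t); [apply endpoint_poly_deriv |].
    replace (endpoint_poly n s T i0) with (h i0) by (extensionality u; auto). apply Hh. }
rewrite Heq. unfold h. rewrite poly_at_center, dcoef_iter_0, binom_coef_low by lia. ring.
Qed.

Definition AkB (n m : nat) (A B : mat) (k : nat) (u : vec) : vec :=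
  mvec n (mpow n A k) (mvec m B u).

Lemma AkB_S n m A B k u i : mvec n A (AkB n m A B k u) i = AkB n m A B (S k) u i.
Proof. unfold AkB. simpl mpow. rewrite mvec_mmul. auto. Qed.

Lemma AkB_0 n m A B u i : (i < n)%nat -> AkB n m A B 0 u i = mvec m B u i.
Proof. intros; unfold AkB; simpl. apply mvec_idm; auto. Qed.

Lemma AkB_ext n m A B k u v i : (forall c, (c < m)%nat -> u c = v c) ->
  AkB n m A B k u i = AkB n m A B k v i.
Proof. intros. unfold AkB. apply mvec_ext. intros. apply mvec_ext. auto. Qed.

Lemma AkB_scal_plus n m A B k a u v i :
  AkB n m A B k (fun c => a * u c + v c) i = a * AkB n m A B k u i + AkB n m A B k v i.
Proof. unfold AkB. rewrite <- mvec_scal, <- mvec_plus. apply mvec_ext. intros. rewrite mvec_plus, mvec_scal. auto. Qed.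

Lemma AkB_minus_scal n m A B k a u v i :
  AkB n m A B k (fun c => u c - a * v c) i = AkB n m A B k u i - a * AkB n m A B k v i.
Proof. unfold AkB. rewrite <- mvec_scal, <- mvec_minus. apply mvec_ext. intros. rewrite mvec_minus, mvec_scal. auto. Qed.

Lemma AkB_scal n m A B k a u i : AkB n m A B k (fun c => a * u c) i = a * AkB n m A B k u i.
Proof. unfold AkB. rewrite <- mvec_scal. apply mvec_ext. intros. rewrite mvec_scal. auto. Qed.

Lemma AkB_zero n m A B k i : AkB n m A B k (fun _ => 0) i = 0.
Proof. rewrite (AkB_ext _ _ _ _ _ _ (fun _ => 0 * 0)), AkB_scal by (intros; ring). ring. Qed.

Lemma derivable_pt_lim_AkB n m A B k (u : R -> vec) (u' : vec) i t :
  (forall b, (b < m)%nat -> derivable_pt_lim (fun t => u t b) t (u' b)) ->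
  derivable_pt_lim (fun t => AkB n m A B k (u t) i) t (AkB n m A B k u' i).
Proof.
intros H. unfold AkB, mvec.
apply (derivable_pt_lim_sumR n (fun c t => mpow n A k i c * sumR m (fun b => B c b * u t b))).
intros c Hc. apply derivable_pt_lim_scal.
apply (derivable_pt_lim_sumR m (fun b t => B c b * u t b)). intros b Hb.
apply derivable_pt_lim_scal. auto.
Qed.

Lemma div_mod_add_mul m a k : (0 < m)%nat -> (a < m)%nat ->
  ((a + m * k) / m = k /\ (a + m * k) mod m = a)%nat.
Proof.
intros Hm Ha. rewrite (Nat.mul_comm m k). split.
- rewrite Nat.div_add, Nat.div_small by lia. lia.
- rewrite Nat.Div0.mod_add. apply Nat.mod_small; lia.
Qed.

Definition unit_vec (a : nat) : vec := fun b => if Nat.eqb b a then 1 else 0.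

Lemma AkB_kalman n m A B k u i : (0 < m)%nat ->
  AkB n m A B k u i = sumR m (fun b => kalman n m A B i (b + m * k)%nat * u b).
Proof.
intros Hm. unfold AkB. rewrite <- mvec_mmul. unfold mvec. apply sumR_ext. intros b Hb.
unfold kalman. destruct (div_mod_add_mul m b k Hm Hb) as [-> ->]. auto.
Qed.

Lemma AkB_unit_vec n m A B k a i : (0 < m)%nat -> (a < m)%nat ->
  AkB n m A B k (unit_vec a) i = kalman n m A B i (a + m * k)%nat.
Proof.
intros. rewrite AkB_kalman by auto. unfold unit_vec.
rewrite (sumR_indicator m a (fun b => kalman n m A B i (b + m * k)%nat) 1) by auto. ring.
Qed.

Lemma dot_AkB_eq0 n m A B k lam : (0 < m)%nat ->
  (forall a, (a < m)%nat -> dot n lam (AkB n m A B k (unit_vec a)) = 0) ->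
  forall u, dot n lam (AkB n m A B k u) = 0.
Proof.
intros Hm H u.
rewrite (dot_ext n lam lam _ (fun r => sumR m (fun a => u a * AkB n m A B k (unit_vec a) r))); auto.
- rewrite dot_sumR. apply sumR_eq0. intros a Ha. rewrite dot_scal_r, H by auto. ring.
- intros r Hr. rewrite AkB_kalman by auto. apply sumR_ext. intros a Ha.
  rewrite AkB_unit_vec by auto. ring.
Qed.

Lemma controllable_dual n m A B lam : controllable n m A B -> (0 < m)%nat ->
  (forall k a, (k < n)%nat -> (a < m)%nat -> dot n lam (AkB n m A B k (unit_vec a)) = 0) ->
  forall i, (i < n)%nat -> lam i = 0.
Proof.
intros Hc Hm H. apply Hc. intros j Hj.
assert (Hj' : j = (j mod m + m * (j / m))%nat) by (rewrite (Nat.div_mod_eq j m) at 1; lia).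
rewrite <- (H (j / m)%nat (j mod m)%nat);
  [| apply Nat.Div0.div_lt_upper_bound; lia | apply Nat.mod_upper_bound; lia].
unfold dot. apply sumR_ext. intros i Hi.
rewrite AkB_unit_vec, <- Hj' by (auto; apply Nat.mod_upper_bound; lia). auto.
Qed.

Lemma AkB_reduction n m A B : controllable n m A B -> (0 < m)%nat ->
  exists H : nat -> vec -> vec, forall w i, (i < n)%nat ->
    AkB n m A B n w i = sumR n (fun k => AkB n m A B k (H k w) i).
Proof.
intros Hc Hm.
assert (Hs : forall w, exists cf : vec, forall i, (i < n)%nat ->
  sumR (n * m) (fun j => kalman n m A B i j * cf j) = AkB n m A B n w i)
  by (intros w; apply full_row_rank_surj, Hc).
exists (fun k w b => proj1_sig (constructive_indefinite_description _ (Hs w)) (b + m * k)%nat).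
intros w i Hi. destruct (constructive_indefinite_description _ (Hs w)) as [cf Hcf]. simpl.
rewrite <- Hcf, sumR_mult_index by auto. apply sumR_ext. intros k Hk.
rewrite AkB_kalman by auto. auto.
Qed.

Definition shift (g : nat -> R) : nat -> R := fun i => g (S i).

(* Flat outputs: for a scalar function with derivatives g = (g, g', g'', ...)
   and a direction w, flat_state and flat_input form a trajectory of the
   control system (lemma flat_state_shift). *)
Section FlatOutput.
Variables (n m : nat) (A B : mat) (H : nat -> vec -> vec).

Fixpoint flat_coef (j : nat) (w : vec) (g : nat -> R) (d : nat) : vec :=
  match j with
  | O => fun a => g d * w a
  | S j' => fun a => flat_coef j' w g (S d) a - g d * H (n - 1 - j')%nat w a
  end.

Definition flat_state (w : vec) (g : nat -> R) : vec :=
  fun i => sumR n (fun j => AkB n m A B (n - 1 - j) (flat_coef j w g O) i).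

Definition flat_input (w : vec) (g : nat -> R) : vec :=
  fun a => flat_coef (n - 1) w g 1 a - g O * H O w a.

Lemma flat_coef_shift j w g d a : flat_coef j w (shift g) d a = flat_coef j w g (S d) a.
Proof. revert d; induction j; intros d; simpl; auto. rewrite IHj. auto. Qed.

Lemma flat_coef_eq0 j w g d a : (forall i, (i <= j + d)%nat -> g i = 0) -> flat_coef j w g d a = 0.
Proof.
revert d; induction j; intros d Hg; simpl; [rewrite Hg by lia; ring |].
rewrite IHj by (intros; apply Hg; lia). rewrite Hg by lia. ring.
Qed.

Lemma flat_coef_lead j w g d a k : (forall i, (i < k)%nat -> g i = 0) -> (j + d <= k)%nat ->
  flat_coef j w g d a = g (j + d)%nat * w a.
Proof.
revert d; induction j; intros d Hg Hk; simpl; auto.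
rewrite IHj, (Hg d) by (auto; lia). replace (j + S d)%nat with (S (j + d)) by lia. ring.
Qed.

Lemma flat_coef_lin j w g1 g2 al d a :
  flat_coef j w (fun i => al * g1 i + g2 i) d a = al * flat_coef j w g1 d a + flat_coef j w g2 d a.
Proof. revert d; induction j; intros d; simpl; [ring | rewrite IHj; ring]. Qed.

Lemma flat_coef_deriv (gam : R -> nat -> R) j w d a t :
  (forall i t, derivable_pt_lim (fun t => gam t i) t (gam t (S i))) ->
  derivable_pt_lim (fun t => flat_coef j w (gam t) d a) t (flat_coef j w (gam t) (S d) a).
Proof.
intros Hg. revert d; induction j; intros d; simpl.
- apply derivable_pt_lim_scal_r, Hg.
- apply derivable_pt_lim_minus; [apply IHj | apply derivable_pt_lim_scal_r, Hg].
Qed.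

Lemma flat_state_lin w g1 g2 al i :
  flat_state w (fun i => al * g1 i + g2 i) i = al * flat_state w g1 i + flat_state w g2 i.
Proof.
unfold flat_state. rewrite <- sumR_scal_l, <- sumR_plus. apply sumR_ext; intros.
rewrite <- AkB_scal_plus. apply AkB_ext. intros. apply flat_coef_lin.
Qed.

Lemma flat_state_eq0 w g i : (forall i, (i < n)%nat -> g i = 0) -> flat_state w g i = 0.
Proof.
intros Hg. unfold flat_state. apply sumR_eq0. intros j Hj.
rewrite <- (AkB_zero n m A B (n - 1 - j) i). apply AkB_ext.
intros. apply flat_coef_eq0. intros; apply Hg; lia.
Qed.

Lemma flat_state_deriv (gam : R -> nat -> R) w i t :
  (forall i t, derivable_pt_lim (fun t => gam t i) t (gam t (S i))) ->
  derivable_pt_lim (fun t => flat_state w (gam t) i) t (flat_state w (shift (gam t)) i).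
Proof.
intros Hg. unfold flat_state.
apply (derivable_pt_lim_sumR n (fun j t => AkB n m A B (n - 1 - j) (flat_coef j w (gam t) 0) i)).
intros j Hj. apply derivable_pt_lim_AkB. intros b Hb. rewrite flat_coef_shift.
apply flat_coef_deriv; auto.
Qed.

Lemma flat_input_deriv (gam : R -> nat -> R) w a t :
  (forall i t, derivable_pt_lim (fun t => gam t i) t (gam t (S i))) ->
  derivable_pt_lim (fun t => flat_input w (gam t) a) t (flat_input w (shift (gam t)) a).
Proof.
intros Hg. unfold flat_input. apply derivable_pt_lim_minus.
- rewrite flat_coef_shift. apply flat_coef_deriv; auto.
- apply derivable_pt_lim_scal_r, Hg.
Qed.

End FlatOutput.

Lemma flat_state_shift n m A B H w g i :
  (forall w i, (i < n)%nat -> AkB n m A B n w i = sumR n (fun k => AkB n m A B k (H k w) i)) ->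
  (0 < n)%nat -> (i < n)%nat ->
  flat_state n m A B H w (shift g) i
  = mvec n A (flat_state n m A B H w g) i + mvec m B (flat_input n H w g) i.
Proof.
intros H_spec Hn Hi. destruct n as [| n']; [lia |].
set (S1 := sumR n' (fun j => AkB (S n') m A B (n' - j) (flat_coef (S n') H j w g 1) i)).
set (S2 := sumR n' (fun j => AkB (S n') m A B (n' - j) (H (n' - j)%nat w) i)).
assert (E1 : flat_state (S n') m A B H w (shift g) i = S1 + AkB (S n') m A B 0 (flat_coef (S n') H n' w g 1) i).
{ unfold flat_state. change (sumR (S n') ?f) with (sumR n' f + f n'); cbv beta. replace (S n' - 1 - n')%nat with O by lia.
  rewrite (AkB_ext _ _ _ _ _ (flat_coef (S n') H n' w (shift g) 0) (flat_coef (S n') H n' w g 1)) by (intros; apply flat_coef_shift).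
  unfold S1. f_equal. apply sumR_ext; intros j Hj. replace (S n' - 1 - j)%nat with (n' - j)%nat by lia.
  apply AkB_ext; intros; apply flat_coef_shift. }
assert (E2 : mvec (S n') A (flat_state (S n') m A B H w g) i = g O * AkB (S n') m A B (S n') w i + S1 - g O * S2).
{ unfold flat_state. rewrite mvec_sumR.
  rewrite (sumR_ext _ _ (fun j => AkB (S n') m A B (S (S n' - 1 - j)) (flat_coef (S n') H j w g 0) i))
    by (intros; apply AkB_S).
  rewrite sumR_S. replace (S (S n' - 1 - 0)) with (S n') by lia.
  rewrite (AkB_ext _ _ _ _ _ (flat_coef (S n') H 0 w g 0) (fun c => g O * w c)), AkB_scal by (intros; simpl; auto).
  rewrite (sumR_ext n' _ (fun j => AkB (S n') m A B (n' - j) (flat_coef (S n') H j w g 1) i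
                                   - g O * AkB (S n') m A B (n' - j) (H (n' - j)%nat w) i)).
  - rewrite sumR_minus, sumR_scal_l. unfold S1, S2. ring.
  - intros j Hj. replace (S (S n' - 1 - S j)) with (n' - j)%nat by lia. simpl flat_coef.
    rewrite <- AkB_minus_scal. apply AkB_ext. intros. rewrite Nat.sub_0_r. auto. }
assert (E3 : AkB (S n') m A B (S n') w i = AkB (S n') m A B 0 (H O w) i + S2).
{ rewrite H_spec, sumR_S by auto. f_equal. unfold S2. rewrite (sumR_rev n').
  apply sumR_ext; intros j Hj. replace (S (n' - 1 - j))%nat with (n' - j)%nat by lia. auto. }
assert (E4 : mvec m B (flat_input (S n') H w g) i
             = AkB (S n') m A B 0 (flat_coef (S n') H n' w g 1) i - g O * AkB (S n') m A B 0 (H O w) i).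
{ unfold flat_input. rewrite mvec_minus, mvec_scal, !AkB_0 by auto.
  replace (S n' - 1)%nat with n' by lia. auto. }
rewrite E1, E2, E3, E4. ring.
Qed.

Section SteerToOrigin.
Variables (n m : nat) (A B : mat) (T : R) (H : nat -> vec -> vec).
Hypothesis H_spec : forall w i, (i < n)%nat ->
  AkB n m A B n w i = sumR n (fun k => AkB n m A B k (H k w) i).
Hypothesis n_pos : (0 < n)%nat.
Hypothesis m_pos : (0 < m)%nat.
Hypothesis T_neq0 : T <> 0.
Hypothesis AB_ctrl : controllable n m A B.

Let jet (s : nat) (t : R) : nat -> R := fun i => endpoint_poly n s T i t.
Notation Y := (flat_state n m A B H).

(* Eliminate the lowest nonzero g_s against jet s 0, whose first nonzero entry has index s. *)
Lemma orth_flat_state lam w : (forall s, (s < n)%nat -> dot n lam (Y w (jet s 0)) = 0) ->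
  forall t, (t <= n)%nat -> forall g, (forall i, (i < n - t)%nat -> g i = 0) -> dot n lam (Y w g) = 0.
Proof.
intros Hf t. induction t; intros Ht g Hg.
- apply sumR_eq0. intros i Hi. rewrite flat_state_eq0; [ring |]. intros; apply Hg; lia.
- set (s := (n - S t)%nat). assert (Hs : (s < n)%nat) by (unfold s; lia).
  assert (Hgs : jet s 0 s <> 0) by (apply endpoint_poly_0_diag; auto).
  set (al := g s / jet s 0 s).
  set (g' := fun i => g i - al * jet s 0 i).
  rewrite (dot_ext n lam lam _ (fun i => al * Y w (jet s 0) i + Y w g' i)); auto.
  2:{ intros i Hi. rewrite <- flat_state_lin. f_equal. extensionality k. unfold g'. ring. }
  rewrite dot_plus_r, dot_scal_r, Hf by auto. rewrite IHt; [ring | lia |].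
  intros i Hi. unfold g'. destruct (Nat.eq_dec i s) as [-> |].
  + unfold al. field. auto.
  + rewrite Hg by (unfold s in *; lia). unfold jet. rewrite endpoint_poly_0_low by (unfold s in *; lia). ring.
Qed.

Let delta_seq (i : nat) : nat -> R := fun d => if Nat.eqb d i then 1 else 0.

Lemma orth_AkB_of_orth_flat_state lam :
  (forall a, (a < m)%nat -> forall g, dot n lam (Y (unit_vec a) g) = 0) ->
  forall t, (t <= n)%nat -> forall i, (n - t <= i < n)%nat -> forall a, (a < m)%nat ->
    dot n lam (AkB n m A B (n - 1 - i) (unit_vec a)) = 0.
Proof.
intros Hf t. induction t; intros Ht i Hi a Ha; [lia |].
destruct (Nat.eq_dec i (n - S t)%nat); [| apply IHt; lia].
subst i. rewrite <- (Hf a Ha (delta_seq (n - S t))). unfold flat_state. rewrite dot_sumR.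
rewrite (sumR_only n (n - S t)%nat); [| lia |].
- apply dot_ext; auto. intros r Hr. apply AkB_ext. intros c Hc.
  rewrite (flat_coef_lead n H _ _ _ _ _ (n - S t)%nat); [| | lia].
  + unfold delta_seq. rewrite Nat.add_0_r, Nat.eqb_refl. ring.
  + intros i Hi'. unfold delta_seq. destruct (Nat.eqb_spec i (n - S t)); [lia | auto].
- intros j Hj Hne. destruct (Nat.lt_ge_cases j (n - S t)).
  + apply sumR_eq0. intros r Hr.
    rewrite (AkB_ext _ _ _ _ _ _ (fun _ => 0)), AkB_zero; [ring |].
    intros. apply flat_coef_eq0. intros i Hi'. unfold delta_seq.
    destruct (Nat.eqb_spec i (n - S t)); [lia | auto].
  + apply dot_AkB_eq0; auto. intros a' Ha'. apply IHt; lia.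
Qed.

Lemma flat_state_full_row_rank :
  full_row_rank n (n * m) (fun i j => Y (unit_vec (j mod m)) (jet (j / m) 0) i).
Proof.
intros lam Hl.
assert (Hf : forall a, (a < m)%nat -> forall s, (s < n)%nat -> dot n lam (Y (unit_vec a) (jet s 0)) = 0).
{ intros a Ha s Hs. destruct (div_mod_add_mul m a s m_pos Ha) as [E1 E2].
  rewrite <- E1, <- E2 at 1. apply Hl. nia. }
apply (controllable_dual n m A B lam AB_ctrl m_pos). intros k a Hk Ha.
replace k with (n - 1 - (n - 1 - k))%nat by lia.
apply (orth_AkB_of_orth_flat_state lam) with (t := n); try lia.
intros a' Ha' g. apply (orth_flat_state lam (unit_vec a')) with (t := n); auto; intros; lia.
Qed.

Lemma jet_deriv s : forall i t, derivable_pt_lim (fun t => jet s t i) t (jet s t (S i)).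
Proof. intros. apply endpoint_poly_deriv. Qed.

Lemma steer_to_origin (x0 : vec) : exists (y v : R -> vec),
  (forall i, (i < n)%nat -> y 0 i = x0 i) /\ (forall i, (i < n)%nat -> y T i = 0) /\
  (forall t i, (i < n)%nat ->
     derivable_pt_lim (fun t => y t i) t (mvec n A (y t) i + mvec m B (v t) i)) /\
  (forall t a, continuity_pt (fun t => v t a) t).
Proof.
destruct (full_row_rank_surj _ _ _ flat_state_full_row_rank x0) as [cw Hcw].
exists (fun t i => sumR (n * m) (fun j => cw j * Y (unit_vec (j mod m)) (jet (j / m) t) i)).
exists (fun t a => sumR (n * m) (fun j => cw j * flat_input n H (unit_vec (j mod m)) (jet (j / m) t) a)).
split; [| split; [| split]].
- intros i Hi. rewrite <- Hcw by auto. apply sumR_ext; intros. ring.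
- intros i Hi. apply sumR_eq0. intros j Hj. rewrite flat_state_eq0; [ring |].
  intros k Hk. apply endpoint_poly_T; auto.
- intros t i Hi. eapply derivable_pt_lim_eq.
  + apply (derivable_pt_lim_sumR (n * m)
      (fun j t => cw j * Y (unit_vec (j mod m)) (jet (j / m) t) i)).
    intros j Hj. apply derivable_pt_lim_scal, flat_state_deriv, jet_deriv.
  + rewrite !mvec_sumR, <- sumR_plus. apply sumR_ext. intros j Hj.
    rewrite !mvec_scal, flat_state_shift; auto. ring.
- intros t a. apply derivable_continuous_pt. eexists.
  apply (derivable_pt_lim_sumR (n * m)
    (fun j t => cw j * flat_input n H (unit_vec (j mod m)) (jet (j / m) t) a)).
  intros j Hj. apply derivable_pt_lim_scal, flat_input_deriv, jet_deriv.
Qed.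

End SteerToOrigin.

Definition negm (A : mat) : mat := fun i j => - A i j.

Lemma mvec_negm k X u i : mvec k (negm X) u i = - mvec k X u i.
Proof.
unfold mvec, negm. replace (- sumR k (fun c => X i c * u c)) with ((-1) * sumR k (fun c => X i c * u c)) by ring.
rewrite <- sumR_scal_l. apply sumR_ext; intros; ring.
Qed.

Lemma kalman_negm n m A B i j :
  kalman n m (negm A) (negm B) i j = - (-1) ^ (j / m) * kalman n m A B i j.
Proof.
assert (Hpow : forall k i j, mpow n (negm A) k i j = (-1) ^ k * mpow n A k i j).
{ induction k; intros; simpl; [ring |].
  unfold mmul. rewrite <- sumR_scal_l. apply sumR_ext. intros c Hc. rewrite IHk. unfold negm. ring. }
unfold kalman, mmul. rewrite <- sumR_scal_l. apply sumR_ext. intros c Hc.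
rewrite Hpow. unfold negm. ring.
Qed.

Lemma controllable_negm n m A B : controllable n m A B -> controllable n m (negm A) (negm B).
Proof.
intros Hc v Hv. apply Hc. intros j Hj. specialize (Hv j Hj).
assert (Hs : - (-1) ^ (j / m) <> 0) by (apply Ropp_neq_0_compat, pow_nonzero; lra).
apply (Rmult_eq_reg_l (- (-1) ^ (j / m))); auto. rewrite Rmult_0_r, <- sumR_scal_l, <- Hv.
apply sumR_ext. intros i Hi. rewrite kalman_negm. ring.
Qed.

(* Steer x0 to 0 forward and p to 0 for the time-reversed system, then add. *)
Lemma controllable_steer n m A B T : controllable n m A B -> T <> 0 -> forall x0 p : vec,
  exists (y v : R -> vec),
  (forall i, (i < n)%nat -> y 0 i = x0 i) /\ (forall i, (i < n)%nat -> y T i = p i) /\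
  (forall t i, (i < n)%nat ->
     derivable_pt_lim (fun t => y t i) t (mvec n A (y t) i + mvec m B (v t) i)) /\
  (forall t a, continuity_pt (fun t => v t a) t).
Proof.
intros Hc HT x0 p. destruct (Nat.eq_dec n 0) as [-> | Hn].
{ exists (fun _ => x0), (fun _ _ => 0). repeat split; intros; try lia.
  apply continuity_pt_const. intros u w; auto. }
assert (Hm : (0 < m)%nat).
{ destruct m; [| lia]. exfalso. enough ((fun _ : nat => 1) O = 0) by lra.
  apply (Hc (fun _ => 1)) with (i := O); [intros; lia | lia]. }
destruct (AkB_reduction n m A B Hc Hm) as [H1 HH1].
destruct (AkB_reduction n m _ _ (controllable_negm n m A B Hc) Hm) as [H2 HH2].
destruct (steer_to_origin n m A B T H1 HH1 ltac:(lia) Hm HT Hc x0)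
  as [y1 [v1 [Y10 [Y1T [Y1d Y1c]]]]].
destruct (steer_to_origin n m _ _ T H2 HH2 ltac:(lia) Hm HT (controllable_negm n m A B Hc) p)
  as [y2 [v2 [Y20 [Y2T [Y2d Y2c]]]]].
exists (fun t i => y1 t i + y2 (T - t) i), (fun t a => v1 t a + v2 (T - t) a).
split; [| split; [| split]].
- intros i Hi. rewrite Y10, Rminus_0_r, Y2T by auto. ring.
- intros i Hi. rewrite Y1T, Rminus_diag, Y20 by auto. ring.
- intros t i Hi. eapply derivable_pt_lim_eq.
  + apply (derivable_pt_lim_plus (fun t => y1 t i) (fun t => y2 (T - t) i)); [apply Y1d; auto |].
    apply (derivable_pt_lim_comp (fun t => T - t) (fun s => y2 s i)); [| apply Y2d; auto].
    apply derivable_pt_lim_minus; [apply derivable_pt_lim_const | apply derivable_pt_lim_id].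
  + rewrite !mvec_plus, !mvec_negm. ring.
- intros t a. apply (continuity_pt_plus (fun t => v1 t a) (fun t => v2 (T - t) a)); auto.
  apply (continuity_pt_comp (fun t => T - t) (fun s => v2 s a)); auto.
  apply continuity_pt_minus; [apply continuity_pt_const; intros u w; auto |].
  apply derivable_continuous_pt, derivable_pt_id.
Qed.

Definition riccati_rhs n m (A B : mat) (q r : R) (G : mat) : mat := fun i j =>
  / r * mmul n (mmul m (mmul n G B) (trm B)) G i j - mmul n G A i j - mmul n (trm A) G i j
  - q * idm i j.

Definition skew (G : mat) : mat := fun i j => G i j - G j i.

Definition frob2 n (D : mat) : R := sumR n (fun i => sumR n (fun j => D i j * D i j)).

Lemma frob2_nonneg n D : 0 <= frob2 n D.
Proof. apply sumR_nonneg; intros; apply sumR_nonneg; intros; nra. Qed.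

Lemma frob2_eq0 n D : frob2 n D = 0 -> forall i j, (i < n)%nat -> (j < n)%nat -> D i j = 0.
Proof.
intros H0 i j Hi Hj.
assert (H1 := sumR_nonneg_eq0 n _ (fun i _ => sumR_nonneg n _ (fun j _ => Rle_0_sqr (D i j))) H0 i Hi).
assert (H2 := sumR_nonneg_eq0 n _ (fun j _ => Rle_0_sqr (D i j)) H1 j Hj).
simpl in H2. unfold Rsqr in H2. apply Rmult_integral in H2. tauto.
Qed.

Lemma derivable_pt_lim_frob2 n (D : R -> mat) Dd t :
  (forall i j, (i < n)%nat -> (j < n)%nat -> derivable_pt_lim (fun t => D t i j) t (Dd i j)) ->
  derivable_pt_lim (fun t => frob2 n (D t)) t
    (sumR n (fun i => sumR n (fun j => Dd i j * D t i j + D t i j * Dd i j))).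
Proof.
intros HD. unfold frob2.
apply (derivable_pt_lim_sumR n (fun i t => sumR n (fun j => D t i j * D t i j))). intros i Hi.
apply (derivable_pt_lim_sumR n (fun j t => D t i j * D t i j)). intros j Hj.
apply (derivable_pt_lim_mult (fun t => D t i j) (fun t => D t i j)); auto.
Qed.

Lemma cont_on_frob2 n (D : R -> mat) a b : a <= b ->
  (forall i j, (i < n)%nat -> (j < n)%nat -> cont_on a b (fun t => D t i j)) ->
  cont_on a b (fun t => frob2 n (D t)).
Proof.
intros Hab HD. unfold frob2.
apply (cont_on_sumR a b n (fun i t => sumR n (fun j => D t i j * D t i j))); auto. intros i Hi.
apply (cont_on_sumR a b n (fun j t => D t i j * D t i j)); auto. intros j Hj.
apply (cont_on_mult a b (fun t => D t i j) (fun t => D t i j)); auto.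
Qed.

Lemma abs_mult_le_half_sq a b : Rabs a * Rabs b <= (a * a + b * b) / 2.
Proof.
assert (0 <= (a - b) * (a - b)) by apply Rle_0_sqr.
assert (0 <= (a + b) * (a + b)) by apply Rle_0_sqr.
unfold Rabs; repeat destruct Rcase_abs; nra.
Qed.

Lemma sumR3_abs_le n (f c : nat -> nat -> nat -> R) :
  (forall i j k, (i < n)%nat -> (j < n)%nat -> (k < n)%nat -> Rabs (f i j k) <= c i j k) ->
  Rabs (sumR n (fun i => sumR n (fun j => sumR n (fun k => f i j k))))
  <= sumR n (fun i => sumR n (fun j => sumR n (fun k => c i j k))).
Proof.
intros H. apply sumR_abs_le. intros i Hi. apply sumR_abs_le. intros j Hj.
apply sumR_abs_le. intros k Hk. auto.
Qed.

Lemma abs_mult3_le K a b x : Rabs x <= K ->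
  Rabs (a * b * x) <= K / 2 * (a * a) + K / 2 * (b * b).
Proof.
intros Hx. rewrite !Rabs_mult. assert (H1 := abs_mult_le_half_sq a b).
assert (0 <= Rabs a * Rabs b) by (apply Rmult_le_pos; apply Rabs_pos).
assert (0 <= K) by (eapply Rle_trans; [apply Rabs_pos | eauto]).
assert (Rabs a * Rabs b * Rabs x <= Rabs a * Rabs b * K) by (apply Rmult_le_compat_l; auto).
assert (Rabs a * Rabs b * K <= (a * a + b * b) / 2 * K) by (apply Rmult_le_compat_r; auto).
lra.
Qed.

Lemma frob2_form_left_bound n (D X : mat) K :
  (forall k j, (k < n)%nat -> (j < n)%nat -> Rabs (X k j) <= K) ->
  Rabs (sumR n (fun i => sumR n (fun j => D i j * sumR n (fun k => D i k * X k j))))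
  <= K * INR n * frob2 n D.
Proof.
intros HX.
rewrite (sumR_ext n _ (fun i => sumR n (fun j => sumR n (fun k => D i j * D i k * X k j)))).
2:{ intros i Hi. apply sumR_ext. intros j Hj. rewrite <- sumR_scal_l. apply sumR_ext; intros; ring. }
eapply Rle_trans.
{ apply (sumR3_abs_le n _ (fun i j k => K / 2 * (D i j * D i j) + K / 2 * (D i k * D i k))).
  intros. apply abs_mult3_le; auto. }
right. unfold frob2. rewrite <- sumR_scal_l. apply sumR_ext. intros i Hi.
rewrite (sumR_ext n _ (fun j => K / 2 * INR n * (D i j * D i j) + K / 2 * sumR n (fun k => D i k * D i k)))
  by (intros; rewrite sumR_plus, sumR_const, sumR_scal_l; ring).
rewrite sumR_plus, !sumR_scal_l, sumR_const. field.
Qed.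

Lemma frob2_form_right_bound n (D X : mat) K :
  (forall i k, (i < n)%nat -> (k < n)%nat -> Rabs (X i k) <= K) ->
  Rabs (sumR n (fun i => sumR n (fun j => D i j * sumR n (fun k => X i k * D k j))))
  <= K * INR n * frob2 n D.
Proof.
intros HX.
rewrite (sumR_ext n _ (fun i => sumR n (fun j => sumR n (fun k => D i j * D k j * X i k)))).
2:{ intros i Hi. apply sumR_ext. intros j Hj. rewrite <- sumR_scal_l. apply sumR_ext; intros; ring. }
eapply Rle_trans.
{ apply (sumR3_abs_le n _ (fun i j k => K / 2 * (D i j * D i j) + K / 2 * (D k j * D k j))).
  intros. apply abs_mult3_le; auto. }
right. unfold frob2.
rewrite (sumR_ext n _ (fun i => K / 2 * INR n * sumR n (fun j => D i j * D i j)
                               + K / 2 * sumR n (fun j => sumR n (fun k => D k j * D k j)))).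
- rewrite sumR_plus, !sumR_scal_l, sumR_const, (sumR_swap n n (fun j k => D k j * D k j)). field.
- intros i Hi.
  rewrite (sumR_ext n _ (fun j => K / 2 * INR n * (D i j * D i j) + K / 2 * sumR n (fun k => D k j * D k j)))
    by (intros; rewrite sumR_plus, sumR_const, sumR_scal_l; ring).
  rewrite sumR_plus, !sumR_scal_l. ring.
Qed.

Lemma mmul_abs_le p X Y K1 K2 a b : 0 <= K1 ->
  (forall c, (c < p)%nat -> Rabs (X a c) <= K1) -> (forall c, (c < p)%nat -> Rabs (Y c b) <= K2) ->
  Rabs (mmul p X Y a b) <= INR p * K1 * K2.
Proof.
intros HK1 HX HY. unfold mmul.
replace (INR p * K1 * K2) with (sumR p (fun _ => K1 * K2)) by (rewrite sumR_const; ring).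
apply sumR_abs_le. intros c Hc. rewrite Rabs_mult.
apply Rmult_le_compat; auto; apply Rabs_pos.
Qed.

Lemma mat_abs_bound n m (X : mat) :
  exists K, 0 <= K /\ forall i j, (i < n)%nat -> (j < m)%nat -> Rabs (X i j) <= K.
Proof.
exists (sumR n (fun i => sumR m (fun j => Rabs (X i j)))). split.
- apply sumR_nonneg; intros; apply sumR_nonneg; intros; apply Rabs_pos.
- intros i j Hi Hj. eapply Rle_trans; [| apply (sumR_ge_term n _ i)]; auto.
  + apply (sumR_ge_term m (fun j => Rabs (X i j)) j); auto. intros; apply Rabs_pos.
  + intros; apply sumR_nonneg; intros; apply Rabs_pos.
Qed.

Lemma bound_finite_family k (P : nat -> R -> Prop) :
  (forall i K K', P i K -> K <= K' -> P i K') ->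
  (forall i, (i < k)%nat -> exists K, P i K) -> exists K, 0 <= K /\ forall i, (i < k)%nat -> P i K.
Proof.
intros Hmono H. induction k.
- exists 0. split; [lra | intros; lia].
- destruct IHk as [K1 [HK1 H1]]; [intros; apply H; lia |].
  destruct (H k) as [K2 H2]; [lia |].
  exists (Rmax K1 K2). split; [eapply Rle_trans; [apply HK1 | apply Rmax_l] |].
  intros i Hi. destruct (Nat.eq_dec i k) as [-> |].
  + eapply Hmono; eauto; apply Rmax_r.
  + eapply Hmono; [apply H1; lia | apply Rmax_l].
Qed.

Lemma riccati_rhs_skew n m A B q r G i j :
  skew (riccati_rhs n m A B q r G) i j =
  / r * (sumR n (fun k => skew G i k * mmul n (mmul m B (trm B)) G k j)
         + sumR n (fun k => mmul n (trm G) (mmul m B (trm B)) i k * skew G k j))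
  - sumR n (fun k => skew G i k * A k j) - sumR n (fun k => trm A i k * skew G k j).
Proof.
set (E := mmul m B (trm B)).
assert (Es : forall k l, E k l = E l k) by (intros; unfold E, mmul, trm; apply sumR_ext; intros; ring).
assert (HQ : forall a b, mmul n (mmul m (mmul n G B) (trm B)) G a b
                         = sumR n (fun k => sumR n (fun l => G a l * E l k * G k b))).
{ intros. unfold mmul at 1. apply sumR_ext. intros k Hk. rewrite mmul_assoc. fold E.
  unfold mmul. rewrite <- sumR_scal_r. auto. }
assert (HX1 : sumR n (fun k => skew G i k * mmul n E G k j)
              = sumR n (fun k => sumR n (fun l => (G i l - G l i) * E l k * G k j))).
{ rewrite sumR_swap. apply sumR_ext; intros k Hk. unfold mmul. rewrite <- sumR_scal_l.
  apply sumR_ext; intros. unfold skew. ring. }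
assert (HX2 : sumR n (fun k => mmul n (trm G) E i k * skew G k j)
              = sumR n (fun k => sumR n (fun l => G l i * E l k * (G k j - G j k)))).
{ apply sumR_ext; intros k Hk. unfold mmul, trm. rewrite <- sumR_scal_r.
  apply sumR_ext; intros. unfold skew. ring. }
assert (HQ2 : sumR n (fun k => sumR n (fun l => G j l * E l k * G k i))
              = sumR n (fun k => sumR n (fun l => G l i * E l k * G j k))).
{ rewrite sumR_swap. apply sumR_ext; intros k Hk. apply sumR_ext; intros l Hl. rewrite Es. ring. }
assert (HL1 : mmul n G A i j - mmul n (trm A) G j i = sumR n (fun k => skew G i k * A k j)).
{ unfold mmul, trm, skew. rewrite <- sumR_minus. apply sumR_ext; intros; ring. }
assert (HL2 : mmul n (trm A) G i j - mmul n G A j i = sumR n (fun k => trm A i k * skew G k j)).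
{ unfold mmul, trm, skew. rewrite <- sumR_minus. apply sumR_ext; intros; ring. }
assert (HS : sumR n (fun k => sumR n (fun l => G i l * E l k * G k j))
             - sumR n (fun k => sumR n (fun l => G l i * E l k * G j k))
           = sumR n (fun k => sumR n (fun l => (G i l - G l i) * E l k * G k j))
             + sumR n (fun k => sumR n (fun l => G l i * E l k * (G k j - G j k)))).
{ rewrite <- sumR_minus, <- sumR_plus. apply sumR_ext; intros k Hk.
  rewrite <- sumR_minus, <- sumR_plus. apply sumR_ext; intros; ring. }
unfold skew at 1, riccati_rhs. rewrite !HQ. fold E. rewrite HX1, HX2, HQ2, <- HL1, <- HL2, <- HS.
unfold idm. rewrite Nat.eqb_sym. ring.
Qed.

(* The skew part S of a Riccati solution satisfies a linear ODE S' = F(S), so |S|^2 obeys a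
   Gronwall inequality. *)
Lemma riccati_rhs_skew_energy_ge n m A B q r KG : 0 < r -> 0 <= KG ->
  exists c, forall G, (forall i j, (i < n)%nat -> (j < n)%nat -> Rabs (G i j) <= KG) ->
    - c * frob2 n (skew G)
    <= sumR n (fun i => sumR n (fun j =>
         skew (riccati_rhs n m A B q r G) i j * skew G i j
         + skew G i j * skew (riccati_rhs n m A B q r G) i j)).
Proof.
intros Hr HKG.
destruct (mat_abs_bound n n (mmul m B (trm B))) as [KE [HKE0 HKE]].
destruct (mat_abs_bound n n A) as [KA [HKA0 HKA]].
set (K1 := INR n * KE * KG). set (K2 := INR n * KG * KE).
assert (HK1 : 0 <= K1) by (unfold K1; repeat apply Rmult_le_pos; auto; apply pos_INR).
assert (HK2 : 0 <= K2) by (unfold K2; repeat apply Rmult_le_pos; auto; apply pos_INR).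
exists (2 * (/ r * (K1 + K2) + 2 * KA) * INR n). intros G HG.
set (D := skew G). set (E := mmul m B (trm B)) in *.
set (t1 := sumR n (fun i => sumR n (fun j => D i j * sumR n (fun k => D i k * mmul n E G k j)))).
set (t2 := sumR n (fun i => sumR n (fun j => D i j * sumR n (fun k => mmul n (trm G) E i k * D k j)))).
set (t3 := sumR n (fun i => sumR n (fun j => D i j * sumR n (fun k => D i k * A k j)))).
set (t4 := sumR n (fun i => sumR n (fun j => D i j * sumR n (fun k => trm A i k * D k j)))).
assert (Ex : sumR n (fun i => sumR n (fun j =>
               skew (riccati_rhs n m A B q r G) i j * D i j + D i j * skew (riccati_rhs n m A B q r G) i j))
             = 2 * / r * t1 + 2 * / r * t2 - 2 * t3 - 2 * t4).
{ unfold t1, t2, t3, t4. rewrite <- !sumR_scal_l, <- !sumR_plus, <- !sumR_minus.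
  apply sumR_ext; intros i Hi. rewrite <- !sumR_scal_l, <- !sumR_plus, <- !sumR_minus.
  apply sumR_ext; intros j Hj. rewrite riccati_rhs_skew. fold D E. ring. }
assert (T1 : Rabs t1 <= K1 * INR n * frob2 n D).
{ apply frob2_form_left_bound. intros. apply mmul_abs_le; auto. }
assert (T2 : Rabs t2 <= K2 * INR n * frob2 n D).
{ apply frob2_form_right_bound. intros. apply mmul_abs_le; auto. intros. apply HG; auto. }
assert (T3 : Rabs t3 <= KA * INR n * frob2 n D) by (apply frob2_form_left_bound; auto).
assert (T4 : Rabs t4 <= KA * INR n * frob2 n D) by (apply frob2_form_right_bound; intros; apply HKA; auto).
rewrite Ex. fold D.
apply Rabs_le_between in T1, T2, T3, T4.
assert (0 <= frob2 n D) by apply frob2_nonneg. assert (0 <= INR n) by apply pos_INR.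
assert (Hri : 0 < / r) by (apply Rinv_0_lt_compat; auto).
assert (/ r * (- (K1 * INR n * frob2 n D)) <= / r * t1) by (apply Rmult_le_compat_l; lra).
assert (/ r * (- (K2 * INR n * frob2 n D)) <= / r * t2) by (apply Rmult_le_compat_l; lra).
nra.
Qed.

Lemma riccati_sol_bounded n m A B q r T M G : 0 < T -> riccati_sol n m A B q r T M G ->
  exists KG, 0 <= KG /\ forall t, 0 <= t <= T ->
    forall i j, (i < n)%nat -> (j < n)%nat -> Rabs (G t i j) <= KG.
Proof.
intros HT Hric.
destruct (bound_finite_family n
  (fun i K => forall j, (j < n)%nat -> forall t, 0 <= t <= T -> Rabs (G t i j) <= K))
  as [KG [HKG0 HKG]].
- intros i K K' H HK j Hj t Ht. eapply Rle_trans; eauto.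
- intros i Hi.
  destruct (bound_finite_family n (fun j K => forall t, 0 <= t <= T -> Rabs (G t i j) <= K))
    as [K [_ HK]].
  + intros j K K' H HK t Ht; eapply Rle_trans; eauto.
  + intros j Hj. apply cont_on_bounded; [lra |]. apply (Hric i j); auto.
  + exists K. auto.
- exists KG. split; auto.
Qed.

Lemma riccati_sol_sym n m A B q r T M G : 0 < T -> 0 < r -> riccati_sol n m A B q r T M G ->
  forall t, 0 <= t <= T -> forall i j, (i < n)%nat -> (j < n)%nat -> G t i j = G t j i.
Proof.
intros HT Hr Hric.
destruct (riccati_sol_bounded n m A B q r T M G HT Hric) as [KG [HKG0 HKG]].
destruct (riccati_rhs_skew_energy_ge n m A B q r KG Hr HKG0) as [c Hc].
assert (Hdiff : forall i j, (i < n)%nat -> (j < n)%nat -> forall t, 0 < t < T ->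
  derivable_pt_lim (fun t => skew (G t) i j) t (skew (riccati_rhs n m A B q r (G t)) i j)).
{ intros i j Hi Hj t Ht. apply (derivable_pt_lim_minus (fun t => G t i j) (fun t => G t j i));
    [apply (Hric i j) | apply (Hric j i)]; auto. }
assert (Hzero : forall t, 0 <= t <= T -> frob2 n (skew (G t)) = 0).
{ apply (backward_gronwall_eq0 0 T c _ (fun t => sumR n (fun i => sumR n (fun j =>
       skew (riccati_rhs n m A B q r (G t)) i j * skew (G t) i j
       + skew (G t) i j * skew (riccati_rhs n m A B q r (G t)) i j)))); auto.
  - apply cont_on_frob2; [lra |]. intros i j Hi Hj. unfold skew.
    apply (cont_on_minus 0 T (fun t => G t i j) (fun t => G t j i)); [lra | apply (Hric i j) | apply (Hric j i)]; auto.
  - intros t Ht. apply derivable_pt_lim_frob2. intros i j Hi Hj. apply Hdiff; auto.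
  - intros t Ht. apply Hc. intros; apply HKG; auto; lra.
  - intros; apply frob2_nonneg.
  - apply sumR_eq0; intros i Hi. apply sumR_eq0; intros j Hj. unfold skew.
    rewrite (proj2 (Hric _ _ Hi Hj)), (proj2 (Hric _ _ Hj Hi)). unfold idm. rewrite Nat.eqb_sym. ring. }
intros t Ht i j Hi Hj. enough (skew (G t) i j = 0) by (unfold skew in *; lra).
apply (frob2_eq0 n); auto.
Qed.

Definition quad_value n (G : mat) (b : vec) (d : R) (y : vec) : R :=
  / 2 * dot n y (mvec n G y) + dot n b y + d.

Lemma quad_value_ext n G b d y y' : (forall i, (i < n)%nat -> y i = y' i) ->
  quad_value n G b d y = quad_value n G b d y'.
Proof.
intros H. unfold quad_value. rewrite (dot_ext n y y' (mvec n G y) (mvec n G y')), (dot_ext n b b y y'); auto.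
intros; apply mvec_ext; auto.
Qed.

Lemma quad_value_terminal n M (G : mat) (b : vec) d (p y : vec) :
  (forall i j, (i < n)%nat -> (j < n)%nat -> G i j = M * idm i j) ->
  (forall i, (i < n)%nat -> b i = - M * p i) -> d = M / 2 * dot n p p ->
  quad_value n G b d y = M / 2 * dot n (fun c => y c - p c) (fun c => y c - p c).
Proof.
intros HG Hb Hd. unfold quad_value. rewrite Hd.
rewrite (dot_ext n y y (mvec n G y) (fun i => M * y i)), (dot_ext n b (fun i => - M * p i) y y); auto.
- rewrite !dot_scal_r, !dot_scal_l, !dot_minus_l, !dot_minus_r, (dot_comm n y p). field.
- intros i Hi. rewrite <- (mvec_idm n y i), <- mvec_scal by auto. unfold mvec. apply sumR_ext. intros.
  rewrite HG by auto. ring.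
Qed.

Lemma derivable_pt_lim_quad_value n (G : R -> mat) (b y : R -> vec) (d : R -> R) Gd bd dd yd t :
  (forall i c, (i < n)%nat -> (c < n)%nat -> derivable_pt_lim (fun t => G t i c) t (Gd i c)) ->
  (forall i, (i < n)%nat -> derivable_pt_lim (fun t => b t i) t (bd i)) ->
  derivable_pt_lim d t dd ->
  (forall i, (i < n)%nat -> derivable_pt_lim (fun t => y t i) t (yd i)) ->
  derivable_pt_lim (fun t => quad_value n (G t) (b t) (d t) (y t)) t
    (/ 2 * (dot n yd (mvec n (G t) (y t)) + dot n (y t) (fun i => mvec n Gd (y t) i + mvec n (G t) yd i))
     + (dot n bd (y t) + dot n (b t) yd) + dd).
Proof.
intros HG Hb Hd Hy. unfold quad_value.
apply (derivable_pt_lim_plus (fun t => / 2 * dot n (y t) (mvec n (G t) (y t)) + dot n (b t) (y t)) d); auto.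
apply (derivable_pt_lim_plus (fun t => / 2 * dot n (y t) (mvec n (G t) (y t))) (fun t => dot n (b t) (y t))).
- apply (derivable_pt_lim_scal (fun t => dot n (y t) (mvec n (G t) (y t)))).
  apply (derivable_pt_lim_dot n y (fun t => mvec n (G t) (y t))); auto.
  intros i Hi. apply derivable_pt_lim_mvec; auto.
- apply derivable_pt_lim_dot; auto.
Qed.

Lemma cont_on_quad_value n (G : R -> mat) (b y : R -> vec) (d : R -> R) a c : a <= c ->
  (forall i j, (i < n)%nat -> (j < n)%nat -> cont_on a c (fun t => G t i j)) ->
  (forall i, (i < n)%nat -> cont_on a c (fun t => b t i)) -> cont_on a c d ->
  (forall i, (i < n)%nat -> cont_on a c (fun t => y t i)) ->
  cont_on a c (fun t => quad_value n (G t) (b t) (d t) (y t)).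
Proof.
intros Hac HG Hb Hd Hy. unfold quad_value.
apply (cont_on_plus a c (fun t => / 2 * dot n (y t) (mvec n (G t) (y t)) + dot n (b t) (y t)) d); auto.
apply (cont_on_plus a c (fun t => / 2 * dot n (y t) (mvec n (G t) (y t))) (fun t => dot n (b t) (y t))); auto.
- apply (cont_on_mult a c (fun _ => / 2) (fun t => dot n (y t) (mvec n (G t) (y t)))); auto.
  + apply cont_on_const.
  + apply cont_on_dot; auto. intros; apply cont_on_mvec; auto.
- apply cont_on_dot; auto.
Qed.

Definition quad_value_rate n m (B : mat) (q r : R) (G : mat) (b xh y v : vec) : R :=
  r / 2 * dot m (fun a => v a + / r * mvec n (trm B) (fun i => mvec n G y i + b i) a)
                (fun a => v a + / r * mvec n (trm B) (fun i => mvec n G y i + b i) a)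
  - r / 2 * dot m v v - q / 2 * dot n (fun i => y i - xh i) (fun i => y i - xh i).

Section CompletionOfSquares.
Variables (n m : nat) (A B : mat) (q r : R) (G : mat).
Hypothesis r_neq0 : r <> 0.
Hypothesis G_sym : forall i j, (i < n)%nat -> (j < n)%nat -> G i j = G j i.

Lemma dot_riccati_rhs y :
  dot n y (mvec n (riccati_rhs n m A B q r G) y)
  = / r * dot m (mvec n (trm B) (mvec n G y)) (mvec n (trm B) (mvec n G y))
    - 2 * dot n (mvec n A y) (mvec n G y) - q * dot n y y.
Proof.
set (Gy := mvec n G y). set (Ay := mvec n A y). set (wy := mvec n (trm B) Gy).
rewrite (dot_ext n y y _ (fun i => / r * mvec n G (mvec m B wy) i - mvec n G Ay i
                                   - mvec n (trm A) Gy i - q * mvec n idm y i)); auto.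
2:{ intros i Hi. unfold riccati_rhs, mvec at 1.
    rewrite (sumR_ext n _ (fun c => / r * (mmul n (mmul m (mmul n G B) (trm B)) G i c * y c)
                                   - mmul n G A i c * y c - mmul n (trm A) G i c * y c
                                   - q * (idm i c * y c))) by (intros; ring).
    rewrite !sumR_minus, !sumR_scal_l.
    fold (mvec n (mmul n (mmul m (mmul n G B) (trm B)) G) y i) (mvec n (mmul n G A) y i)
         (mvec n (mmul n (trm A) G) y i) (mvec n idm y i).
    rewrite !mvec_mmul. reflexivity. }
rewrite !dot_minus_r, !dot_scal_r, (dot_mvec_sym n G y), dot_mvec by auto. fold Gy wy.
rewrite (dot_mvec_sym n G y Ay) by auto. fold Gy. rewrite (dot_comm n Gy Ay).
rewrite (dot_mvec n n y (trm A) Gy). change (mvec n (trm (trm A)) y) with Ay.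
rewrite (dot_ext n y y (mvec n idm y) y) by (auto; intros; apply mvec_idm; auto).
ring.
Qed.

Lemma dot_beta_rhs b xh y :
  dot n (fun i => / r * mvec n (mmul m (mmul n G B) (trm B)) b i - mvec n (trm A) b i + q * xh i) y
  = / r * dot m (mvec n (trm B) (mvec n G y)) (mvec n (trm B) b) - dot n b (mvec n A y) + q * dot n xh y.
Proof.
rewrite dot_plus_l, dot_minus_l, !dot_scal_l.
rewrite (dot_ext n _ (mvec n G (mvec m B (mvec n (trm B) b))) y y) by (auto; intros; rewrite !mvec_mmul; auto).
rewrite dot_comm, (dot_mvec_sym n G y) by auto. rewrite dot_mvec.
rewrite (dot_comm n (mvec n (trm A) b) y), (dot_mvec n n y (trm A) b), (dot_comm n _ b).
reflexivity.
Qed.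

Lemma quad_value_deriv_identity (Gd : mat) (b bd xh y yd v : vec) dd :
  (forall i j, (i < n)%nat -> (j < n)%nat -> Gd i j = riccati_rhs n m A B q r G i j) ->
  (forall i, (i < n)%nat ->
     bd i = / r * mvec n (mmul m (mmul n G B) (trm B)) b i - mvec n (trm A) b i + q * xh i) ->
  dd = / (2 * r) * dot m (mvec n (trm B) b) (mvec n (trm B) b) - q / 2 * dot n xh xh ->
  (forall i, (i < n)%nat -> yd i = mvec n A y i + mvec m B v i) ->
  / 2 * (dot n yd (mvec n G y) + dot n y (fun i => mvec n Gd y i + mvec n G yd i))
  + (dot n bd y + dot n b yd) + dd
  = quad_value_rate n m B q r G b xh y v.
Proof.
intros HGd Hbd Hdd Hyd. unfold quad_value_rate.
set (Gy := mvec n G y). set (Ay := mvec n A y). set (Bv := mvec m B v).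
set (wy := mvec n (trm B) Gy). set (wb := mvec n (trm B) b).
assert (E1 : dot n yd Gy = dot n Ay Gy + dot n Bv Gy) by (rewrite <- dot_plus_l; apply dot_ext; auto).
assert (E2 : dot n y (fun i => mvec n Gd y i + mvec n G yd i)
             = dot n y (mvec n (riccati_rhs n m A B q r G) y) + (dot n Ay Gy + dot n Bv Gy)).
{ rewrite dot_plus_r, (dot_ext n y y (mvec n Gd y) (mvec n (riccati_rhs n m A B q r G) y)); auto.
  - f_equal. rewrite dot_mvec_sym, dot_comm by auto. fold Gy. auto.
  - intros i Hi. unfold mvec. apply sumR_ext. intros. rewrite HGd; auto. }
assert (E4 : dot n bd y = / r * dot m wy wb - dot n b Ay + q * dot n xh y).
{ rewrite (dot_ext n bd _ y y Hbd) by auto. apply dot_beta_rhs. }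
assert (E5 : dot n b yd = dot n b Ay + dot n b Bv) by (rewrite <- dot_plus_r; apply dot_ext; auto).
assert (E6 : dot n Bv Gy = dot m v wy) by (unfold Bv; rewrite dot_comm, dot_mvec; apply dot_comm).
assert (E7 : dot n b Bv = dot m v wb) by (unfold Bv; rewrite dot_mvec; apply dot_comm).
rewrite E1, E2, dot_riccati_rhs, E4, E5, E6, E7, Hdd. fold Gy Ay wy wb.
rewrite (dot_ext m (fun a => v a + / r * mvec n (trm B) (fun i => Gy i + b i) a)
                   (fun a => v a + / r * (wy a + wb a))
                   (fun a => v a + / r * mvec n (trm B) (fun i => Gy i + b i) a)
                   (fun a => v a + / r * (wy a + wb a))) by (intros; rewrite mvec_plus; auto).
rewrite !dot_plus_l, !dot_plus_r, !dot_scal_l, !dot_scal_r, !dot_plus_l, !dot_plus_r.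
rewrite !dot_minus_l, !dot_minus_r, (dot_comm m wy v), (dot_comm m wb v), (dot_comm m wb wy), (dot_comm n y xh).
field. auto.
Qed.

End CompletionOfSquares.

(* Completion of squares: along y' = Ay + Bv the value function changes at rate
   r/2 |v + B'(Gy + b)/r|^2 - r/2 |v|^2 - q/2 |y - xh|^2. *)
Lemma derivable_pt_lim_quad_value_sol n m A B q r T M G b d xh pk (y v : R -> vec) t :
  0 < r -> 0 < T -> riccati_sol n m A B q r T M G -> beta_sol n m A B q r T M G xh pk b ->
  delta_sol n m B q r T M xh pk b d -> 0 < t < T ->
  (forall i, (i < n)%nat -> derivable_pt_lim (fun t => y t i) t (mvec n A (y t) i + mvec m B (v t) i)) ->
  derivable_pt_lim (fun t => quad_value n (G t) (b t) (d t) (y t)) t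
    (quad_value_rate n m B q r (G t) (b t) (xh t) (y t) (v t)).
Proof.
intros Hr HT Hric Hb Hd Ht Hy. eapply derivable_pt_lim_eq.
- apply (derivable_pt_lim_quad_value n G b y d (riccati_rhs n m A B q r (G t)));
    [intros i c Hi Hc; apply (Hric i c) | intros i Hi; apply (Hb i) | apply Hd | apply Hy]; auto.
- apply (quad_value_deriv_identity n m A B q r); try lra; auto.
  intros; apply (riccati_sol_sym n m A B q r T M G); auto; lra.
Qed.

Lemma quad_value_closed_loop_le n m A B q r T M G b d xh pk x0 x : 0 < q -> 0 < r -> 0 < T ->
  riccati_sol n m A B q r T M G -> beta_sol n m A B q r T M G xh pk b ->
  delta_sol n m B q r T M xh pk b d -> agent_traj n m A B r T G b x0 x ->
  quad_value n (G T) (b T) (d T) (x T) <= quad_value n (G 0) (b 0) (d 0) (x 0).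
Proof.
intros Hq Hr HT Hric Hb Hd Hx.
set (v := fun t a => - / r * mvec n (trm B) (fun c => mvec n (G t) (x t) c + b t c) a).
apply (le_of_deriv_nonpos 0 T (fun t => quad_value n (G t) (b t) (d t) (x t)) (fun t => quad_value_rate n m B q r (G t) (b t) (xh t) (x t) (v t))); auto.
- apply cont_on_quad_value; [lra | intros; apply (Hric i j) | intros; apply (Hb i) | apply Hd | intros; apply (Hx i)];
    auto.
- intros t Ht. apply (derivable_pt_lim_quad_value_sol n m A B q r T M G b d xh pk); auto.
  intros i Hi. apply (Hx i); auto.
- intros t Ht. unfold quad_value_rate. rewrite dot_self_eq0 by (intros a Ha; unfold v; field; lra).
  assert (0 <= dot m (v t) (v t)) by apply dot_self_nonneg.
  assert (0 <= dot n (fun i => x t i - xh t i) (fun i => x t i - xh t i)) by apply dot_self_nonneg.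
  nra.
Qed.

(* xt is a continuous extension of xh to R, needed for the primitive of |xh|^2. *)
Lemma quad_value_le_tracking_cost n m A B q r T M G b d xh pk (y v xt : R -> vec) :
  0 < q -> 0 < r -> 0 < T ->
  riccati_sol n m A B q r T M G -> beta_sol n m A B q r T M G xh pk b ->
  delta_sol n m B q r T M xh pk b d ->
  (forall t i, (i < n)%nat -> derivable_pt_lim (fun t => y t i) t (mvec n A (y t) i + mvec m B (v t) i)) ->
  (forall t a, continuity_pt (fun t => v t a) t) ->
  (forall t i, (i < n)%nat -> continuity_pt (fun t => xt t i) t) ->
  (forall t, 0 < t < T -> forall i, (i < n)%nat -> xt t i = xh t i) ->
  quad_value n (G 0) (b 0) (d 0) (y 0)
  <= quad_value n (G T) (b T) (d T) (y T)
     + RInt (fun t => q * dot n (y t) (y t) + r / 2 * dot m (v t) (v t)) 0 T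
     + q * RInt (fun t => dot n (xt t) (xt t)) 0 T.
Proof.
intros Hq Hr HT Hric Hb Hd Hy Hv Hxt Hxe.
set (V := fun t => quad_value n (G t) (b t) (d t) (y t)).
set (F1 := fun t => q * dot n (y t) (y t) + r / 2 * dot m (v t) (v t)).
set (F2 := fun t => dot n (xt t) (xt t)).
assert (Hyc : forall t i, (i < n)%nat -> continuity_pt (fun t => y t i) t)
  by (intros; apply derivable_continuous_pt; eexists; apply Hy; auto).
assert (HF1 : forall t, continuity_pt F1 t).
{ intros t. apply (continuity_pt_plus (fun t => q * dot n (y t) (y t)) (fun t => r / 2 * dot m (v t) (v t)));
    [apply (continuity_pt_scal (fun t => dot n (y t) (y t))) | apply (continuity_pt_scal (fun t => dot m (v t) (v t)))];
    apply continuity_pt_dot; auto. }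
assert (HF2 : forall t, continuity_pt F2 t) by (intros t; apply continuity_pt_dot; auto).
assert (Hmono := le_of_deriv_nonneg 0 T (fun t => V t + RInt F1 0 t + q * RInt F2 0 t)
  (fun t => quad_value_rate n m B q r (G t) (b t) (xh t) (y t) (v t) + F1 t + q * F2 t)).
cbv beta in Hmono. rewrite !RInt_point in Hmono. unfold zero in Hmono; simpl in Hmono.
enough (V 0 + 0 + q * 0 <= V T + RInt F1 0 T + q * RInt F2 0 T) by (unfold V in *; lra).
apply Hmono; auto.
- apply (cont_on_plus 0 T (fun t => V t + RInt F1 0 t) (fun t => q * RInt F2 0 t)); [lra | |].
  + apply (cont_on_plus 0 T V (fun t => RInt F1 0 t)); [lra | |].
    * apply cont_on_quad_value; [lra | intros; apply (Hric i j) | intros; apply (Hb i) | apply Hd |];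
        auto. intros; apply cont_on_of_continuity_pt; auto.
    * apply cont_on_of_continuity_pt. intros. apply derivable_continuous_pt.
      eexists. apply derivable_pt_lim_RInt; auto.
  + apply cont_on_of_continuity_pt. intros. apply derivable_continuous_pt.
    eexists. apply derivable_pt_lim_scal, derivable_pt_lim_RInt; auto.
- intros t Ht.
  apply (derivable_pt_lim_plus (fun t => V t + RInt F1 0 t) (fun t => q * RInt F2 0 t));
    [apply (derivable_pt_lim_plus V (fun t => RInt F1 0 t)) |].
  + apply (derivable_pt_lim_quad_value_sol n m A B q r T M G b d xh pk); auto.
  + apply derivable_pt_lim_RInt; auto.
  + apply (derivable_pt_lim_scal (fun t => RInt F2 0 t)). apply derivable_pt_lim_RInt; auto.
- intros t Ht.
  assert (E : F2 t = dot n (xh t) (xh t)) by (unfold F2; apply dot_ext; intros; apply Hxe; auto).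
  rewrite E. unfold F1, quad_value_rate. assert (H1 := dot_self_minus_le n (y t) (xh t)).
  assert (0 <= dot m (fun a => v t a + / r * mvec n (trm B) (fun i => mvec n (G t) (y t) i + b t i) a)
                     (fun a => v t a + / r * mvec n (trm B) (fun i => mvec n (G t) (y t) i + b t i) a))
    by apply dot_self_nonneg.
  nra.
Qed.

Lemma exists_argmin l (f : nat -> R) : (0 < l)%nat ->
  exists j, (j < l)%nat /\ forall k, (k < l)%nat -> f j <= f k.
Proof.
induction l; intros Hl; [lia |]. destruct (Nat.eq_dec l 0) as [-> |].
- exists O. split; auto. intros k Hk. replace k with O by lia. lra.
- destruct IHl as [j [Hj H]]; [lia |]. destruct (Rlt_dec (f l) (f j)).
  + exists l. split; [lia |]. intros k Hk. destruct (Nat.eq_dec k l) as [-> |]; [lra |].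
    specialize (H k ltac:(lia)). lra.
  + exists j. split; [lia |]. intros k Hk. destruct (Nat.eq_dec k l) as [-> |]; [lra |]. apply H; lia.
Qed.

Lemma exists_least_nat (P : nat -> Prop) j : P j -> exists j0, P j0 /\ forall j', (j' < j0)%nat -> ~ P j'.
Proof.
induction j as [j IH] using lt_wf_ind. intros Hj.
destruct (classic (exists j', (j' < j)%nat /\ P j')) as [[j' [Hj' HP]] | Hn].
- apply (IH j' Hj' HP).
- exists j. split; auto. intros j' Hj' HP. apply Hn; eauto.
Qed.

(* D_j is the set where j minimizes k |-> beta_k(0)'x + delta_k(0). *)
Lemma basin_exists n l (b0 : nat -> vec) (d0 : nat -> R) x : (0 < l)%nat -> exists j, basin n l b0 d0 j x.
Proof.
intros Hl. set (f := fun k => dot n (b0 k) x + d0 k).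
assert (Hin : forall j, in_D n l b0 d0 j x <-> forall k, (k < l)%nat -> f j <= f k).
{ intros j. unfold in_D, f. split; intros H k Hk; specialize (H k Hk); rewrite ?dot_minus_l in *; lra. }
destruct (exists_argmin l f Hl) as [j1 Hj1].
destruct (exists_least_nat (fun j => (j < l)%nat /\ forall k, (k < l)%nat -> f j <= f k) j1 Hj1)
  as [j0 [[Hj0 Hm] Hleast]].
exists j0. repeat split; auto; [apply Hin; auto |].
intros j' Hj' HD. apply (Hleast j' Hj'). split; [lia | apply Hin; auto].
Qed.

Lemma RInt_clamp_sq_le n T C (xh : R -> vec) : 0 < T ->
  (forall i, (i < n)%nat -> cont_on 0 T (fun t => xh t i)) ->
  (forall pr : Riemann_integrable (fun t => dot n (xh t) (xh t)) 0 T, sqrt (RiemannInt pr) <= C) ->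
  0 <= C /\ RInt (fun t => dot n (fun i => xh (clamp 0 T t) i) (fun i => xh (clamp 0 T t) i)) 0 T <= C * C.
Proof.
intros HT Hc HC.
set (F := fun t => dot n (fun i => xh (clamp 0 T t) i) (fun i => xh (clamp 0 T t) i)).
assert (Hex : ex_RInt F 0 T).
{ apply (ex_RInt_continuous (V := R_CompleteNormedModule)). intros. apply continuity_pt_filterlim.
  apply continuity_pt_dot; intros; apply (continuity_pt_clamp 0 T (fun u => xh u i)); auto; lra. }
assert (Hext : forall t, Rmin 0 T < t < Rmax 0 T -> F t = dot n (xh t) (xh t)).
{ intros t Ht. rewrite Rmin_left, Rmax_right in Ht by lra.
  apply dot_ext; intros; rewrite clamp_id; auto; lra. }
assert (H1 := HC (ex_RInt_Reals_0 _ _ _ (ex_RInt_ext _ _ 0 T Hext Hex))).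
rewrite <- RInt_Reals, <- (RInt_ext _ _ 0 T Hext) in H1. fold F in H1.
assert (H0 : 0 <= RInt F 0 T) by (apply RInt_ge_0; try lra; auto; intros; apply dot_self_nonneg).
assert (Hs := sqrt_pos (RInt F 0 T)).
split; [lra |]. rewrite <- (sqrt_sqrt _ H0). apply Rmult_le_compat; lra.
Qed.

Lemma agent_terminal_cost_le n m A B q r T M G bj dj bk dk xh pj pk x0 x (y v : R -> vec) :
  0 < q -> 0 < r -> 0 < T -> riccati_sol n m A B q r T M G ->
  beta_sol n m A B q r T M G xh pj bj -> delta_sol n m B q r T M xh pj bj dj ->
  beta_sol n m A B q r T M G xh pk bk -> delta_sol n m B q r T M xh pk bk dk ->
  (forall i, (i < n)%nat -> cont_on 0 T (fun t => xh t i)) ->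
  dot n (fun c => bj 0 c - bk 0 c) x0 <= dk 0 - dj 0 ->
  agent_traj n m A B r T G bj x0 x ->
  (forall i, (i < n)%nat -> y 0 i = x0 i) -> (forall i, (i < n)%nat -> y T i = pk i) ->
  (forall t i, (i < n)%nat -> derivable_pt_lim (fun t => y t i) t (mvec n A (y t) i + mvec m B (v t) i)) ->
  (forall t a, continuity_pt (fun t => v t a) t) ->
  M / 2 * dot n (fun c => x T c - pj c) (fun c => x T c - pj c)
  <= RInt (fun t => q * dot n (y t) (y t) + r / 2 * dot m (v t) (v t)) 0 T
     + q * RInt (fun t => dot n (fun i => xh (clamp 0 T t) i) (fun i => xh (clamp 0 T t) i)) 0 T.
Proof.
intros Hq Hr HT Hric Hbj Hdj Hbk Hdk Hxh HD Hx Hy0 HyT Hyd Hvc.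
assert (Hterm : forall b d p, beta_sol n m A B q r T M G xh p b -> delta_sol n m B q r T M xh p b d ->
  forall z, quad_value n (G T) (b T) (d T) z = M / 2 * dot n (fun c => z c - p c) (fun c => z c - p c)).
{ intros b d p Hb Hd z. apply quad_value_terminal; [intros; apply (Hric i j) | intros; apply (Hb i) | apply Hd];
    auto. }
assert (Hloop := quad_value_closed_loop_le n m A B q r T M G bj dj xh pj x0 x Hq Hr HT Hric Hbj Hdj Hx).
rewrite (Hterm _ _ _ Hbj Hdj), (quad_value_ext n _ _ _ (x 0) x0) in Hloop by (auto; intros; apply (Hx i); auto).
assert (Hbasin : quad_value n (G 0) (bj 0) (dj 0) x0 <= quad_value n (G 0) (bk 0) (dk 0) x0)
  by (rewrite dot_minus_l in HD; unfold quad_value; lra).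
assert (Hxt : forall t i, (i < n)%nat -> continuity_pt (fun t => xh (clamp 0 T t) i) t)
  by (intros; apply (continuity_pt_clamp 0 T (fun u => xh u i)); auto; lra).
assert (Hxe : forall t, 0 < t < T -> forall i, (i < n)%nat -> xh (clamp 0 T t) i = xh t i)
  by (intros; rewrite clamp_id; auto; lra).
assert (Hcost := quad_value_le_tracking_cost n m A B q r T M G bk dk xh pk y v
  (fun t i => xh (clamp 0 T t) i) Hq Hr HT Hric Hbk Hdk Hyd Hvc Hxt Hxe).
rewrite (Hterm _ _ _ Hbk Hdk), (quad_value_ext n _ _ _ (y 0) x0), dot_self_eq0 in Hcost
  by (auto; intros; rewrite ?HyT; auto; ring).
lra.
Qed.

Lemma terminal_cost_uniform_bound n m A B q r T l (p : nat -> vec) N (x0 : nat -> vec)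
  (xhat : R -> R -> vec) (G : R -> R -> mat) (beta : R -> nat -> R -> vec)
  (delta : R -> nat -> R -> R) (x : R -> nat -> R -> vec) C :
  0 < q -> 0 < r -> 0 < T -> (0 < l)%nat -> controllable n m A B ->
  (forall M, 0 < M -> forall i, (i < n)%nat -> cont_on 0 T (fun t => xhat M t i)) ->
  (forall M, 0 < M -> forall pr : Riemann_integrable (fun t => dot n (xhat M t) (xhat M t)) 0 T,
     sqrt (RiemannInt pr) <= C) ->
  (forall M, 0 < M -> riccati_sol n m A B q r T M (G M)) ->
  (forall M, 0 < M -> forall k, (k < l)%nat -> beta_sol n m A B q r T M (G M) (xhat M) (p k) (beta M k)) ->
  (forall M, 0 < M -> forall k, (k < l)%nat ->
     delta_sol n m B q r T M (xhat M) (p k) (beta M k) (delta M k)) ->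
  (forall M, 0 < M -> forall i, (i < N)%nat -> forall j,
     basin n l (fun k => beta M k 0) (fun k => delta M k 0) j (x0 i) ->
     agent_traj n m A B r T (G M) (beta M j) (x0 i) (x M i)) ->
  exists W, 0 <= W /\ forall M, 0 < M -> forall i, (i < N)%nat -> exists j, (j < l)%nat /\
    M / 2 * dot n (fun c => x M i T c - p j c) (fun c => x M i T c - p j c) <= W.
Proof.
intros Hq Hr HT Hl Hc Hxc HC HG Hbeta Hdelta Hag.
assert (HL2 := fun M HM => RInt_clamp_sq_le n T C (xhat M) HT (Hxc M HM) (HC M HM)).
destruct (bound_finite_family N (fun i W => forall M, 0 < M -> exists j, (j < l)%nat /\
    M / 2 * dot n (fun c => x M i T c - p j c) (fun c => x M i T c - p j c) <= W)) as [W [HW0 HW]].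
- intros i K K' HK HKK' M HM. destruct (HK M HM) as [j [Hj Hb]]. exists j. split; [auto | lra].
- intros i Hi.
  destruct (controllable_steer n m A B T Hc ltac:(lra) (x0 i) (p O)) as [y [v [Hy0 [HyT [Hyd Hvc]]]]].
  exists (RInt (fun t => q * dot n (y t) (y t) + r / 2 * dot m (v t) (v t)) 0 T + q * (C * C)).
  intros M HM. destruct (basin_exists n l (fun k => beta M k 0) (fun k => delta M k 0) (x0 i) Hl) as [j Hj].
  destruct Hj as [Hjl [HD Hleast]]. exists j. split; auto.
  eapply Rle_trans.
  + apply (agent_terminal_cost_le n m A B q r T M (G M) (beta M j) (delta M j) (beta M O) (delta M O)
             (xhat M) (p j) (p O) (x0 i) (x M i) y v); auto.
    apply Hag; auto. repeat split; auto.
  + destruct (HL2 M HM) as [_ HL]. apply Rplus_le_compat_l, Rmult_le_compat_l; lra.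
- exists W. split; auto.
Qed.

Lemma sqrt_lt_of_scaled_le W eps M s : 0 <= W -> 0 < eps -> 0 <= s ->
  2 * W / (eps * eps) < M -> M / 2 * s <= W -> sqrt s < eps.
Proof.
intros HW Heps Hs HM Hb.
assert (H2 : 2 * W < M * (eps * eps)).
{ apply (Rmult_lt_compat_r (eps * eps)) in HM; [| nra].
  unfold Rdiv in HM. rewrite Rmult_assoc, Rinv_l in HM by nra. lra. }
assert (HMpos : 0 < M) by nra.
rewrite <- (sqrt_square eps) by lra. apply sqrt_lt_1; [lra | nra |].
destruct (Rlt_or_le s (eps * eps)) as [| Hge]; auto.
assert (M * (eps * eps) <= M * s) by (apply Rmult_le_compat_l; lra). lra.
Qed.

Theorem lemma2 (n m : nat) (A B : mat) (q r T : R) (l : nat) (p : nat -> vec)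
  (N : nat) (x0 : nat -> vec)
  (xhat : R -> R -> vec) (G : R -> R -> mat)
  (beta : R -> nat -> R -> vec) (delta : R -> nat -> R -> R)
  (x : R -> nat -> R -> vec) :
  0 < q -> 0 < r -> 0 < T -> (0 < l)%nat ->
  controllable n m A B ->
  (forall M, 0 < M -> forall i, (i < n)%nat -> cont_on 0 T (fun t => xhat M t i)) ->
  (exists C, forall M, 0 < M ->
     forall pr : Riemann_integrable (fun t => dot n (xhat M t) (xhat M t)) 0 T,
       sqrt (RiemannInt pr) <= C) ->
  (forall M, 0 < M -> riccati_sol n m A B q r T M (G M)) ->
  (forall M, 0 < M -> forall k, (k < l)%nat ->
     beta_sol n m A B q r T M (G M) (xhat M) (p k) (beta M k)) ->
  (forall M, 0 < M -> forall k, (k < l)%nat ->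
     delta_sol n m B q r T M (xhat M) (p k) (beta M k) (delta M k)) ->
  (forall M, 0 < M -> forall i, (i < N)%nat -> forall j,
     basin n l (fun k => beta M k 0) (fun k => delta M k 0) j (x0 i) ->
     agent_traj n m A B r T (G M) (beta M j) (x0 i) (x M i)) ->
  forall eps, 0 < eps ->
    exists M0, 0 < M0 /\
      forall M, M0 < M -> forall i, (i < N)%nat ->
        exists j, (j < l)%nat /\ vnorm n (fun c => x M i T c - p j c) < eps.
Proof.
intros Hq Hr HT Hl Hc Hxc [C HC] HG Hbeta Hdelta Hag eps Heps.
destruct (terminal_cost_uniform_bound n m A B q r T l p N x0 xhat G beta delta x C
            Hq Hr HT Hl Hc Hxc HC HG Hbeta Hdelta Hag) as [W [HW0 HW]].
assert (HM0 : 0 <= 2 * W / (eps * eps))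
  by (apply Rmult_le_pos; [lra | apply Rlt_le, Rinv_0_lt_compat; nra]).
exists (2 * W / (eps * eps) + 1). split; [lra |].
intros M HM i Hi. destruct (HW M ltac:(lra) i Hi) as [j [Hj Hb]].
exists j. split; auto.
apply (sqrt_lt_of_scaled_le W eps M); auto; [apply dot_self_nonneg | lra].
Qed.
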